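(* Let $\beta>0$, $\mu>0$, $0<p<1$, and $\delta=\beta/\mu$. Consider the permanent adoption model $$S_0'=\mu-\beta S_0A-\mu S_0,\qquad S_1'=(1-p)\beta S_0A-\beta S_1A-\mu S_1,\qquad A'=\beta(pS_0+S_1)A-\mu A$$ on the simplex $\{S_0,S_1,A\ge0,\ S_0+S_1+A=1\}$. Let $E_0=(1,0,0)$ be the contagion-free equilibrium, and let $$A_{1,2}=\tfrac12\Big[1-2\delta^{-1}\pm\sqrt{1-4(1-p)\delta^{-1}}\Big]$$ ($+$ for $A_1$, $-$ for $A_2$). For $i=1,2$, whenever $A_i$ is real and positive, let $E_i$ be the point with $A=A_i$, $S_0=1/(\delta A_i+1)$, $S_1=1-S_0-A_i$; the equilibria of the system with $A>0$ (endemic equilibria) are exactly these points. Then: (I) If $p<\tfrac12$: - for $\delta<4(1-p)$ there are no endemic equilibria, and $E_0$ is locally asymptotically stable; - for $4(1-p)<\delta<\tfrac1p$ there are exactly two endemic equilibria $E_1,E_2$, with $E_1$ locally asymptotically stable and $E_2$ unstable, and $E_0$ is locally asymptotically stable; - for $\delta\ge\tfrac1p$ there is a unique endemic equilibrium $E_1$, which is locally asymptotically stable; moreover for $\delta>\tfrac1p$ the equilibrium $E_0$ is unstable. (II) If $p\ge\tfrac12$: - for $\delta\le\tfrac1p$ there is no endemic equilibrium, and for $\delta<\tfrac1p$ the equilibrium $E_0$ is locally asymptotically stable; - for $\delta>\tfrac1p$ there is a unique endemic equilibrium $E_1$, which is locally asymptotically stable, and $E_0$ is unstable.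
   Context: $S_0,S_1,A$ are the fractions of naive, informed and adopter individuals in a population of constant size; $\beta$ is the effective contact rate, $\mu$ the per capita demographic turnover rate, $p$ the probability of adoption on first effective contact with an adopter. $\delta=\beta/\mu$ is called the contact parameter. *)

From Stdlib Require Import Reals Lra.
Open Scope R_scope.

Definition pt : Type := (R * R * R)%type.
Definition pS0 (x : pt) : R := fst (fst x).
Definition pS1 (x : pt) : R := snd (fst x).
Definition pA  (x : pt) : R := snd x.

Definition f0 (beta mu p : R) (s0 s1 a : R) : R := mu - beta * s0 * a - mu * s0.
Definition f1 (beta mu p : R) (s0 s1 a : R) : R :=
  (1 - p) * beta * s0 * a - beta * s1 * a - mu * s1.
Definition f2 (beta mu p : R) (s0 s1 a : R) : R :=
  beta * (p * s0 + s1) * a - mu * a.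

Definition in_simplex (x : pt) : Prop :=
  0 <= pS0 x /\ 0 <= pS1 x /\ 0 <= pA x /\ pS0 x + pS1 x + pA x = 1.

Definition is_equilibrium (beta mu p : R) (x : pt) : Prop :=
  f0 beta mu p (pS0 x) (pS1 x) (pA x) = 0 /\
  f1 beta mu p (pS0 x) (pS1 x) (pA x) = 0 /\
  f2 beta mu p (pS0 x) (pS1 x) (pA x) = 0.

Definition endemic (beta mu p : R) (x : pt) : Prop :=
  in_simplex x /\ 0 < pA x /\ is_equilibrium beta mu p x.

Definition dist3 (x y : pt) : R :=
  Rmax (Rabs (pS0 x - pS0 y)) (Rmax (Rabs (pS1 x - pS1 y)) (Rabs (pA x - pA y))).

Definition solution (beta mu p : R) (x0 x1 x2 : R -> R) : Prop :=
  forall t, 0 <= t ->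
    derivable_pt_lim x0 t (f0 beta mu p (x0 t) (x1 t) (x2 t)) /\
    derivable_pt_lim x1 t (f1 beta mu p (x0 t) (x1 t) (x2 t)) /\
    derivable_pt_lim x2 t (f2 beta mu p (x0 t) (x1 t) (x2 t)).

Definition traj (x0 x1 x2 : R -> R) (t : R) : pt := (x0 t, x1 t, x2 t).

Definition lyap_stable (beta mu p : R) (E : pt) : Prop :=
  forall eps, 0 < eps -> exists d, 0 < d /\
    forall x0 x1 x2 : R -> R, solution beta mu p x0 x1 x2 ->
      in_simplex (traj x0 x1 x2 0) -> dist3 (traj x0 x1 x2 0) E < d ->
      forall t, 0 <= t -> dist3 (traj x0 x1 x2 t) E < eps.

Definition loc_attractive (beta mu p : R) (E : pt) : Prop :=
  exists d, 0 < d /\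
    forall x0 x1 x2 : R -> R, solution beta mu p x0 x1 x2 ->
      in_simplex (traj x0 x1 x2 0) -> dist3 (traj x0 x1 x2 0) E < d ->
      forall eps, 0 < eps -> exists T, forall t, T <= t ->
        dist3 (traj x0 x1 x2 t) E < eps.

Definition loc_asym_stable (beta mu p : R) (E : pt) : Prop :=
  lyap_stable beta mu p E /\ loc_attractive beta mu p E.

Definition unstable (beta mu p : R) (E : pt) : Prop := ~ lyap_stable beta mu p E.

Definition E0 : pt := (1, 0, 0).

Definition A_plus (delta p : R) : R :=
  / 2 * (1 - 2 / delta + sqrt (1 - 4 * (1 - p) / delta)).
Definition A_minus (delta p : R) : R :=
  / 2 * (1 - 2 / delta - sqrt (1 - 4 * (1 - p) / delta)).

Definition Epoint (delta a : R) : pt :=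
  let s0 := 1 / (delta * a + 1) in (s0, 1 - s0 - a, a).

From Stdlib Require Import Reals Lra Lia.
From Coquelicot Require Import Coquelicot.
Open Scope R_scope.

(* Endemic equilibria are the points with [A > 0] for which [u = delta A + 1] is a root of
   [u^2 - delta u + delta (1 - p)]; the conditions [A > 0] and [S1 >= 0] say [u > 1] and
   [u >= p delta], and the values [1 - p delta] and [delta (1 - p) (1 - p delta)] of the
   quadratic at [1] and [p delta] locate these two points relative to the roots.

   Stability is studied on the planar system for [(S0, A)] obtained from [S0 + S1 + A = 1].
   When the linearisation is stable, a quadratic form [a X^2 + Y^2] is a strict Lyapunov
   function, which gives local asymptotic stability.  At a saddle ([E2], and [E0] for
   [delta > 1/p]) a quadratic form grows exponentially where it is positive, so solutions
   starting arbitrarily close, where the form is positive, leave a fixed neighbourhood.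
   Such solutions exist by Picard iteration for the vector field truncated outside
   [[-2, 2]^2], which agrees with the model on the invariant simplex. *)

(** * Differential inequalities *)

Lemma derivable_pt_lim_rw (f : R -> R) x l l' :
  l = l' -> derivable_pt_lim f x l -> derivable_pt_lim f x l'.
Proof. now intros ->. Qed.

Lemma derivable_pt_lim_sqr (f : R -> R) x l :
  derivable_pt_lim f x l -> derivable_pt_lim (fun s => f s ^ 2) x (2 * f x * l).
Proof.
  intro H. apply (derivable_pt_lim_ext (fun s => f s * f s)); [intro; ring|].
  apply (derivable_pt_lim_rw _ _ (l * f x + f x * l)); [ring|].
  now apply derivable_pt_lim_mult.
Qed.

Lemma derivable_pt_lim_mul_exp (V : R -> R) t l k :
  derivable_pt_lim V t l ->
  derivable_pt_lim (fun s => V s * exp (k * s)) t ((l + k * V t) * exp (k * t)).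
Proof.
  intro H. apply is_derive_Reals.
  apply (is_derive_ext (fun s => V s * exp (k * s))); [reflexivity|].
  eapply is_derive_ext; [reflexivity|].
  replace ((l + k * V t) * exp (k * t)) with (l * exp (k * t) + V t * (k * exp (k * t))) by ring.
  apply (is_derive_mult V (fun s => exp (k * s))).
  - now apply is_derive_Reals.
  - auto_derive; auto. ring.
  - intros; apply Rmult_comm.
Qed.

Lemma nondecreasing_of_derive_nonneg (f f' : R -> R) :
  (forall t, 0 <= t -> derivable_pt_lim f t (f' t)) ->
  (forall t, 0 <= t -> 0 <= f' t) -> forall a b, 0 <= a -> a <= b -> f a <= f b.
Proof.
  intros Hd Hp a b ha hab. destruct (Rle_lt_or_eq_dec _ _ hab) as [lt|<-]; [|lra].
  destruct (MVT_cor2 f f' a b lt) as [c [Hc Hc2]].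
  - intros c Hc; apply Hd; lra.
  - assert (0 <= f' c) by (apply Hp; lra). nra.
Qed.

Lemma continuity_pt_ball (f : R -> R) t : continuity_pt f t ->
  forall e, 0 < e -> exists d, 0 < d /\ forall s, Rabs (s - t) < d -> Rabs (f s - f t) < e.
Proof.
  intros H e he. destruct (H e he) as [d [hd H2]]. exists d. split; auto.
  intros s hs. destruct (Req_dec s t) as [->|ne].
  - rewrite Rminus_diag, Rabs_R0; lra.
  - apply (H2 s). repeat split; auto.
Qed.

(* The derivative only has to be nonnegative while [f] is slightly negative:
   at the last time [t0] with [f t0 >= 0], continuity and the mean value theorem
   give a contradiction. *)
Lemma nonneg_barrier (f f' : R -> R) (eps : R) : 0 < eps ->
  (forall t, 0 <= t -> derivable_pt_lim f t (f' t)) -> 0 <= f 0 ->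
  (forall t, 0 <= t -> -eps < f t < 0 -> 0 <= f' t) -> forall t, 0 <= t -> 0 <= f t.
Proof.
  intros heps Hd H0 Hb t1 ht1. destruct (Rle_or_lt 0 (f t1)) as [ok|neg]; auto.
  exfalso.
  assert (Hc : forall t, 0 <= t -> continuity_pt f t).
  { intros t ht. apply derivable_continuous_pt. exists (f' t). now apply Hd. }
  set (E := fun t => 0 <= t <= t1 /\ 0 <= f t).
  assert (bE : bound E) by (exists t1; intros x [hx _]; lra).
  destruct (completeness E bE (ex_intro _ 0 (conj (conj (Rle_refl 0) ht1) H0))) as [t0 [ub lub]].
  assert (h0 : 0 <= t0) by (apply ub; split; lra).
  assert (h1 : t0 <= t1) by (apply lub; intros x [hx _]; lra).
  assert (neg2 : forall t, t0 < t <= t1 -> f t < 0).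
  { intros t ht. destruct (Rle_or_lt 0 (f t)) as [p0|n]; auto.
    assert (t <= t0) by (apply ub; split; lra). lra. }
  assert (ft0 : 0 <= f t0).
  { destruct (Rle_or_lt 0 (f t0)) as [ok|ng]; auto. exfalso.
    destruct (continuity_pt_ball f t0 (Hc t0 h0) (- f t0) ltac:(lra)) as [d [hd Hd2]].
    assert (Hub : is_upper_bound E (t0 - d / 2)).
    { intros x Ex. destruct (Rle_or_lt x (t0 - d / 2)) as [l|l]; auto. exfalso.
      assert (x <= t0) by (apply ub; auto). destruct Ex as [_ Ex].
      assert (Rabs (f x - f t0) < - f t0) by (apply Hd2; rewrite Rabs_left1; lra).
      assert (f x - f t0 <= Rabs (f x - f t0)) by apply Rle_abs. lra. }
    specialize (lub _ Hub). lra. }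
  assert (lt01 : t0 < t1) by (destruct h1 as [l|<-]; auto; lra).
  destruct (continuity_pt_ball f t0 (Hc t0 h0) eps heps) as [d [hd Hd2]].
  set (t2 := Rmin t1 (t0 + d / 2)).
  assert (t0 < t2 <= t1) by (unfold t2; split; [apply Rmin_glb_lt|apply Rmin_l]; lra).
  assert (t2 <= t0 + d / 2) by apply Rmin_r.
  destruct (MVT_cor2 f f' t0 t2) as [c [Hc2 Hc3]]; [lra|intros c Hc'; apply Hd; lra|].
  assert (f c < 0) by (apply neg2; lra).
  assert (Rabs (f c - f t0) < eps) by (apply Hd2; rewrite Rabs_right; lra).
  assert (- (f c - f t0) <= Rabs (f c - f t0)) by (rewrite <- Rabs_Ropp; apply Rle_abs).
  assert (0 <= f' c) by (apply Hb; lra).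
  assert (f t2 < 0) by (apply neg2; lra). nra.
Qed.

(* Comparison with [V 0 * exp (-k t)]; the linear bound [1 + k t <= exp (k t)] is all
   that is used afterwards. *)
Lemma lyapunov_decay (V V' : R -> R) r k : 0 < k ->
  (forall t, 0 <= t -> derivable_pt_lim V t (V' t)) ->
  (forall t, 0 <= t -> 0 <= V t) ->
  (forall t, 0 <= t -> V t <= r -> V' t <= - k * V t) -> V 0 < r ->
  forall t, 0 <= t -> V t <= V 0 /\ V t * (1 + k * t) <= V 0.
Proof.
  intros hk Hd Hp Hb H0.
  set (r' := (V 0 + r) / 2).
  assert (Hr : forall t, 0 <= t -> V t <= r').
  { intros t ht. enough (0 <= r' - V t) by lra.
    apply (nonneg_barrier (fun t => r' - V t) (fun t => - V' t) (r - r')); auto; unfold r' in *; try lra.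
    - intros s hs. apply (derivable_pt_lim_rw _ _ (0 - V' s)); [ring|].
      apply derivable_pt_lim_minus; [apply derivable_pt_lim_const|auto].
    - intros s hs hh. assert (V' s <= - k * V s) by (apply Hb; lra).
      assert (0 <= V s) by auto. nra. }
  assert (HW : forall t, 0 <= t -> V t * exp (k * t) <= V 0).
  { intros t ht.
    enough (- (V 0 * exp (k * 0)) <= - (V t * exp (k * t))) by (rewrite Rmult_0_r, exp_0 in *; lra).
    refine (nondecreasing_of_derive_nonneg (fun s => - (V s * exp (k * s)))
      (fun s => - ((V' s + k * V s) * exp (k * s))) _ _ 0 t (Rle_refl 0) ht).
    - intros s hs. apply derivable_pt_lim_opp, derivable_pt_lim_mul_exp; auto.
    - intros s hs. assert (V' s <= - k * V s) by (apply Hb; auto; specialize (Hr s hs); unfold r' in *; lra).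
      assert (0 < exp (k * s)) by apply exp_pos. nra. }
  intros t ht. specialize (HW t ht).
  assert (1 + k * t <= exp (k * t)) by apply exp_ineq1_le.
  assert (0 <= V t) by auto.
  assert (0 <= k * t) by nra. split; nra.
Qed.

Lemma bounded_exp_growth_nonpos (V V' : R -> R) k B : 0 < k ->
  (forall t, 0 <= t -> derivable_pt_lim V t (V' t)) ->
  (forall t, 0 <= t -> k * V t <= V' t) -> (forall t, 0 <= t -> V t <= B) -> V 0 <= 0.
Proof.
  intros hk Hd Hb HB. destruct (Rle_or_lt (V 0) 0) as [h|h]; auto. exfalso.
  assert (Hg : forall t, 0 <= t -> V 0 <= V t * exp (- k * t)).
  { intros t ht.
    enough (V 0 * exp (- k * 0) <= V t * exp (- k * t)) by (rewrite Rmult_0_r, exp_0 in *; lra).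
    refine (nondecreasing_of_derive_nonneg (fun s => V s * exp (- k * s))
      (fun s => (V' s + - k * V s) * exp (- k * s)) _ _ 0 t (Rle_refl 0) ht).
    - intros s hs. apply derivable_pt_lim_mul_exp, Hd, hs.
    - intros s hs. specialize (Hb s hs). assert (0 < exp (- k * s)) by apply exp_pos. nra. }
  assert (hB : V 0 <= B) by (apply HB; lra).
  set (t := B / (V 0 * k)).
  assert (ht : 0 <= t) by (unfold t; apply Rdiv_le_0_compat; nra).
  specialize (Hg t ht). specialize (HB t ht).
  assert (1 + k * t <= exp (k * t)) by apply exp_ineq1_le.
  assert (Hee : exp (- k * t) * exp (k * t) = 1)
    by (rewrite <- exp_plus; replace (- k * t + k * t) with 0 by ring; apply exp_0).
  assert (0 < exp (k * t)) by apply exp_pos.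
  assert (V 0 * (k * t) = B) by (unfold t; field; lra).
  assert (V 0 * exp (k * t) <= V t) by (replace (V t) with (V t * exp (- k * t) * exp (k * t)) by (rewrite Rmult_assoc, Hee; ring); nra).
  nra.
Qed.

(** * Planar systems with a quadratic nonlinearity *)

Lemma Rabs_le_of_sqr_le x r : 0 <= r -> x ^ 2 <= r ^ 2 -> Rabs x <= r.
Proof. intros hr h. rewrite <- pow2_abs in h. pose proof (Rabs_pos x). nra. Qed.

Lemma neg_def_quadratic_bound P Q T x y : 0 < P -> 0 < T -> 0 < 4 * P * T - Q ^ 2 ->
  - P * x ^ 2 - Q * x * y - T * y ^ 2
  <= - ((4 * P * T - Q ^ 2) / (4 * (P + T))) * (x ^ 2 + y ^ 2).
Proof.
  intros hP hT hD. set (l := (4 * P * T - Q ^ 2) / (4 * (P + T))).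
  assert (hl : l * (4 * (P + T)) = 4 * P * T - Q ^ 2) by (unfold l; field; lra).
  assert (0 < l) by (unfold l; apply Rdiv_lt_0_compat; lra).
  assert (l < P) by (apply Rmult_lt_reg_r with (4 * (P + T)); [lra|]; rewrite hl; nra).
  assert (hdisc : Q ^ 2 <= 4 * (P - l) * (T - l)).
  { replace (4 * (P - l) * (T - l)) with (4 * P * T - l * (4 * (P + T)) + 4 * l ^ 2) by ring.
    rewrite hl. nra. }
  (* the shifted form (P - l) x^2 + Q x y + (T - l) y^2 is still positive semidefinite *)
  assert (0 <= (P - l) * ((P - l) * x ^ 2 + Q * x * y + (T - l) * y ^ 2)).
  { replace ((P - l) * ((P - l) * x ^ 2 + Q * x * y + (T - l) * y ^ 2)) with
      (((P - l) * x + Q / 2 * y) ^ 2 + ((P - l) * (T - l) - Q ^ 2 / 4) * y ^ 2) by field.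
    assert (0 <= ((P - l) * (T - l) - Q ^ 2 / 4) * y ^ 2) by (apply Rmult_le_pos; nra).
    pose proof (pow2_ge_0 ((P - l) * x + Q / 2 * y)). lra. }
  assert (0 <= (P - l) * x ^ 2 + Q * x * y + (T - l) * y ^ 2).
  { destruct (Rle_or_lt 0 ((P - l) * x ^ 2 + Q * x * y + (T - l) * y ^ 2)); auto. nra. }
  nra.
Qed.

Lemma cubic_remainder_bound c1 c2 c3 x y rho m : Rabs x <= rho -> Rabs y <= rho ->
  rho * (Rabs c1 + Rabs c2 + Rabs c3) <= m ->
  Rabs (c1 * x ^ 2 * y + c2 * x * y ^ 2 + c3 * y ^ 3) <= m * (x ^ 2 + y ^ 2).
Proof.
  intros hx hy hm.
  assert (h1 : Rabs (c1 * x ^ 2 * y) <= Rabs c1 * x ^ 2 * rho).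
  { rewrite !Rabs_mult, <- RPow_abs, pow2_abs.
    apply Rmult_le_compat_l; auto. apply Rmult_le_pos; [apply Rabs_pos|apply pow2_ge_0]. }
  assert (h2 : Rabs (c2 * x * y ^ 2) <= Rabs c2 * y ^ 2 * rho).
  { rewrite !Rabs_mult, <- RPow_abs, pow2_abs.
    replace (Rabs c2 * y ^ 2 * rho) with (Rabs c2 * rho * y ^ 2) by ring.
    apply Rmult_le_compat_r; [apply pow2_ge_0|]. apply Rmult_le_compat_l; auto. apply Rabs_pos. }
  assert (h3 : Rabs (c3 * y ^ 3) <= Rabs c3 * y ^ 2 * rho).
  { rewrite Rabs_mult, <- RPow_abs.
    replace (Rabs y ^ 3) with (Rabs y ^ 2 * Rabs y) by ring. rewrite pow2_abs, <- Rmult_assoc.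
    apply Rmult_le_compat_l; auto. apply Rmult_le_pos; [apply Rabs_pos|apply pow2_ge_0]. }
  pose proof (Rabs_triang (c1 * x ^ 2 * y + c2 * x * y ^ 2) (c3 * y ^ 3)).
  pose proof (Rabs_triang (c1 * x ^ 2 * y) (c2 * x * y ^ 2)).
  pose proof (Rabs_pos c1); pose proof (Rabs_pos c2); pose proof (Rabs_pos c3).
  assert (0 <= rho) by (pose proof (Rabs_pos x); lra).
  pose proof (pow2_ge_0 x); pose proof (pow2_ge_0 y).
  assert (0 <= rho * (Rabs c1 * y ^ 2 + (Rabs c2 + Rabs c3) * x ^ 2)) by
    (apply Rmult_le_pos; [lra|]; apply Rplus_le_le_0_compat; apply Rmult_le_pos; lra).
  assert (rho * (Rabs c1 + Rabs c2 + Rabs c3) * (x ^ 2 + y ^ 2) <= m * (x ^ 2 + y ^ 2))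
    by (apply Rmult_le_compat_r; lra).
  nra.
Qed.

Lemma small_radius K m : 0 <= K -> 0 < m -> exists rho, 0 < rho <= 1 /\ rho * K <= m.
Proof.
  intros hK hm. exists (Rmin 1 (m / (K + 1))).
  assert (h : Rmin 1 (m / (K + 1)) <= m / (K + 1)) by apply Rmin_r.
  split; [split; [apply Rmin_glb_lt; [lra|apply Rdiv_lt_0_compat; lra]|apply Rmin_l]|].
  apply (Rmult_le_compat_r (K + 1)) in h; [|lra].
  replace (m / (K + 1) * (K + 1)) with m in h by (field; lra).
  assert (0 <= Rmin 1 (m / (K + 1))) by (apply Rmin_glb; [lra|apply Rdiv_le_0_compat; lra]).
  nra.
Qed.

(* The model on the simplex in coordinates [X = S0 - s], [Y = A - a] centred at an
   equilibrium [(s, 1 - s - a, a)]. *)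
Definition planar_solution (al b k1 c e k2 k3 : R) (X Y : R -> R) : Prop :=
  forall t, 0 <= t ->
    derivable_pt_lim X t (- al * X t - b * Y t - k1 * X t * Y t) /\
    derivable_pt_lim Y t (- c * X t - e * Y t - Y t * (k2 * X t + k3 * Y t)).

Lemma planar_lyapunov_decay (al b k1 c e k2 k3 a : R) : 0 < a -> 0 < al -> 0 < e ->
  0 < 4 * a * al * e - (a * b + c) ^ 2 ->
  exists r k, 0 < r /\ 0 < k /\ forall X Y : R -> R, planar_solution al b k1 c e k2 k3 X Y ->
    a * X 0 ^ 2 + Y 0 ^ 2 < r ->
    forall t, 0 <= t -> a * X t ^ 2 + Y t ^ 2 <= a * X 0 ^ 2 + Y 0 ^ 2 /\
      (a * X t ^ 2 + Y t ^ 2) * (1 + k * t) <= a * X 0 ^ 2 + Y 0 ^ 2.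
Proof.
  intros ha hal he hD.
  set (l := (4 * (a * al) * e - (a * b + c) ^ 2) / (4 * (a * al + e))).
  assert (hl : 0 < l) by (unfold l; apply Rdiv_lt_0_compat; nra).
  set (K := Rabs (- (a * k1)) + Rabs (- k2) + Rabs (- k3)).
  assert (hK : 0 <= K) by (unfold K; pose proof (Rabs_pos (- (a * k1))); pose proof (Rabs_pos (- k2)); pose proof (Rabs_pos (- k3)); lra).
  destruct (small_radius K (l / 2) hK ltac:(lra)) as [rho [hrho hrhoK]].
  set (m := Rmin a 1).
  assert (m1 : m <= a) by apply Rmin_l. assert (m2 : m <= 1) by apply Rmin_r.
  assert (m3 : 0 < m) by (apply Rmin_glb_lt; lra).
  exists (m * rho ^ 2), (l / (a + 1)).
  split; [apply Rmult_lt_0_compat; [lra|apply pow_lt; lra]|]. split; [apply Rdiv_lt_0_compat; lra|].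
  intros X Y HXY H0.
  apply (lyapunov_decay (fun t => a * X t ^ 2 + Y t ^ 2)
    (fun t => 2 * a * X t * (- al * X t - b * Y t - k1 * X t * Y t) +
              2 * Y t * (- c * X t - e * Y t - Y t * (k2 * X t + k3 * Y t))) (m * rho ^ 2)); auto.
  - apply Rdiv_lt_0_compat; lra.
  - intros t ht. destruct (HXY t ht) as [dX dY].
    apply (derivable_pt_lim_rw _ _ (a * (2 * X t * (- al * X t - b * Y t - k1 * X t * Y t))
      + 2 * Y t * (- c * X t - e * Y t - Y t * (k2 * X t + k3 * Y t)))); [ring|].
    apply derivable_pt_lim_plus; [apply derivable_pt_lim_scal|]; now apply derivable_pt_lim_sqr.
  - intros t _. pose proof (pow2_ge_0 (X t)); pose proof (pow2_ge_0 (Y t)); nra.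
  - intros t ht hV. set (x := X t) in *. set (y := Y t) in *.
    pose proof (pow2_ge_0 x); pose proof (pow2_ge_0 y).
    assert (hx : Rabs x <= rho) by (apply Rabs_le_of_sqr_le; nra).
    assert (hy : Rabs y <= rho) by (apply Rabs_le_of_sqr_le; nra).
    assert (Hq := neg_def_quadratic_bound (a * al) (a * b + c) e x y ltac:(nra) he ltac:(nra)). fold l in Hq.
    assert (Hc := cubic_remainder_bound (- (a * k1)) (- k2) (- k3) x y rho (l / 2) hx hy hrhoK).
    apply Rabs_le_between in Hc.
    assert (l / (a + 1) * (a * x ^ 2 + y ^ 2) <= l * (x ^ 2 + y ^ 2)).
    { apply (Rmult_le_reg_l (a + 1)); [lra|].
      replace ((a + 1) * (l / (a + 1) * (a * x ^ 2 + y ^ 2))) with (l * (a * x ^ 2 + y ^ 2)) by (field; lra).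
      replace ((a + 1) * (l * (x ^ 2 + y ^ 2))) with (l * ((a + 1) * (x ^ 2 + y ^ 2))) by ring.
      apply Rmult_le_compat_l; nra. }
    replace (2 * a * x * (- al * x - b * y - k1 * x * y) + 2 * y * (- c * x - e * y - y * (k2 * x + k3 * y)))
      with (2 * (- (a * al) * x ^ 2 - (a * b + c) * x * y - e * y ^ 2)
            + 2 * (- (a * k1) * x ^ 2 * y + - k2 * x * y ^ 2 + - k3 * y ^ 3)) by ring.
    lra.
Qed.

Lemma planar_repelling_trapped (al b k1 e k2 k3 : R) : e < 0 ->
  exists rho, 0 < rho /\ forall X Y : R -> R, planar_solution al b k1 0 e k2 k3 X Y ->
    (forall t, 0 <= t -> Rabs (X t) < rho /\ Rabs (Y t) < rho) -> Y 0 = 0.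
Proof.
  intros he. set (K := Rabs k2 + Rabs k3).
  assert (hK : 0 <= K) by (unfold K; pose proof (Rabs_pos k2); pose proof (Rabs_pos k3); lra).
  destruct (small_radius K (- e / 2) hK ltac:(lra)) as [rho [hrho hrK]].
  exists rho. split; [lra|]. intros X Y HXY Hbox.
  enough (Y 0 ^ 2 <= 0) by (pose proof (pow2_ge_0 (Y 0)); nra).
  apply (bounded_exp_growth_nonpos (fun t => Y t ^ 2)
    (fun t => 2 * Y t * (- 0 * X t - e * Y t - Y t * (k2 * X t + k3 * Y t))) (- e) (rho ^ 2)); [lra| | |].
  - intros t ht. apply derivable_pt_lim_sqr, HXY, ht.
  - intros t ht. destruct (Hbox t ht) as [hx hy].
    assert (Rabs (k2 * X t + k3 * Y t) <= K * rho).
    { eapply Rle_trans; [apply Rabs_triang|]. rewrite !Rabs_mult. unfold K.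
      pose proof (Rabs_pos k2); pose proof (Rabs_pos k3). nra. }
    assert (k2 * X t + k3 * Y t <= K * rho) by (eapply Rle_trans; [apply Rle_abs|eauto]).
    pose proof (pow2_ge_0 (Y t)).
    replace (2 * Y t * (- 0 * X t - e * Y t - Y t * (k2 * X t + k3 * Y t)))
      with (Y t ^ 2 * (2 * (- e - (k2 * X t + k3 * Y t)))) by ring.
    nra.
  - intros t ht. destruct (Hbox t ht) as [_ hy].
    rewrite <- pow2_abs. pose proof (Rabs_pos (Y t)). nra.
Qed.

Definition saddle_form (al b c e x y : R) : R := e / b * x ^ 2 - 2 * x * y + al / c * y ^ 2.

Lemma saddle_form_growth (al b k1 c e k2 k3 : R) :
  0 < b -> 0 < c -> 0 < e -> 0 <= al -> 0 < b * c - al * e ->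
  exists rho kappa, 0 < rho /\ 0 < kappa /\ forall x y, Rabs x <= rho -> Rabs y <= rho ->
    let F := - al * x - b * y - k1 * x * y in
    let G := - c * x - e * y - y * (k2 * x + k3 * y) in
    kappa * saddle_form al b c e x y <= 2 * (e / b) * x * F - 2 * (F * y + x * G) + 2 * (al / c) * y * G.
Proof.
  intros hb hc he hal hD. unfold saddle_form.
  set (u := e / b). set (w := al / c).
  assert (hu : 0 < u) by (unfold u; apply Rdiv_lt_0_compat; lra).
  assert (hw : 0 <= w) by (unfold w; apply Rdiv_le_0_compat; lra).
  set (m1 := 2 * (b * c - al * e) / b). set (m2 := 2 * (b * c - al * e) / c).
  set (m := Rmin m1 m2).
  assert (hm : 0 < m) by (apply Rmin_glb_lt; apply Rdiv_lt_0_compat; lra).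
  assert (hm1 : m <= m1) by apply Rmin_l. assert (hm2 : m <= m2) by apply Rmin_r.
  set (c1 := - 2 * u * k1 + 2 * k2). set (c2 := 2 * k1 + 2 * k3 - 2 * w * k2). set (c3 := - 2 * w * k3).
  set (K := Rabs c1 + Rabs c2 + Rabs c3).
  assert (hK : 0 <= K) by (unfold K; pose proof (Rabs_pos c1); pose proof (Rabs_pos c2); pose proof (Rabs_pos c3); lra).
  destruct (small_radius K (m / 2) hK ltac:(lra)) as [rho [hrho hrK]].
  set (S := u + w + 2). assert (hS : 0 < S) by (unfold S; lra).
  exists rho, (m / (2 * S)). split; [lra|]. split; [apply Rdiv_lt_0_compat; lra|].
  intros x y hx hy. cbv zeta.
  assert (Hc := cubic_remainder_bound c1 c2 c3 x y rho (m / 2) hx hy hrK).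
  apply Rabs_le_between in Hc.
  replace (2 * u * x * (- al * x - b * y - k1 * x * y) - 2 * ((- al * x - b * y - k1 * x * y) * y
      + x * (- c * x - e * y - y * (k2 * x + k3 * y))) + 2 * w * y * (- c * x - e * y - y * (k2 * x + k3 * y)))
    with (m1 * x ^ 2 + m2 * y ^ 2 + (c1 * x ^ 2 * y + c2 * x * y ^ 2 + c3 * y ^ 3))
    by (unfold m1, m2, c1, c2, c3, u, w; field; lra).
  pose proof (pow2_ge_0 x); pose proof (pow2_ge_0 y).
  assert (HQ : m / (2 * S) * (u * x ^ 2 - 2 * x * y + w * y ^ 2) <= m / 2 * (x ^ 2 + y ^ 2)).
  { replace (m / 2 * (x ^ 2 + y ^ 2)) with (m / (2 * S) * (S * (x ^ 2 + y ^ 2))) by (field; lra).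
    apply Rmult_le_compat_l; [left; apply Rdiv_lt_0_compat; lra|].
    unfold S. pose proof (pow2_ge_0 (x + y)). nra. }
  nra.
Qed.

(* As [saddle_form] grows exponentially where it is positive, a solution staying near the
   saddle starts in the cone [saddle_form <= 0]. *)
Lemma planar_saddle_trapped (al b k1 c e k2 k3 : R) :
  0 < b -> 0 < c -> 0 < e -> 0 <= al -> 0 < b * c - al * e ->
  exists rho, 0 < rho /\ forall X Y : R -> R, planar_solution al b k1 c e k2 k3 X Y ->
    (forall t, 0 <= t -> Rabs (X t) < rho /\ Rabs (Y t) < rho) -> saddle_form al b c e (X 0) (Y 0) <= 0.
Proof.
  intros hb hc he hal hD.
  destruct (saddle_form_growth al b k1 c e k2 k3 hb hc he hal hD) as [rho [kappa [hrho [hk Hg]]]].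
  exists rho. split; auto. intros X Y HXY Hbox.
  set (FX := fun t => - al * X t - b * Y t - k1 * X t * Y t).
  set (FY := fun t => - c * X t - e * Y t - Y t * (k2 * X t + k3 * Y t)).
  apply (bounded_exp_growth_nonpos (fun t => saddle_form al b c e (X t) (Y t))
    (fun t => 2 * (e / b) * X t * FX t - 2 * (FX t * Y t + X t * FY t) + 2 * (al / c) * Y t * FY t)
    kappa ((e / b + al / c + 2) * (2 * rho ^ 2))); auto.
  - intros t ht. destruct (HXY t ht) as [dX dY]. unfold saddle_form.
    apply (derivable_pt_lim_ext (fun s => e / b * X s ^ 2 - 2 * (X s * Y s) + al / c * Y s ^ 2)); [intro; ring|].
    apply (derivable_pt_lim_rw _ _ (e / b * (2 * X t * FX t) - 2 * (FX t * Y t + X t * FY t)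
      + al / c * (2 * Y t * FY t))); [ring|].
    apply derivable_pt_lim_plus; [apply derivable_pt_lim_minus|];
      apply derivable_pt_lim_scal; [apply derivable_pt_lim_sqr, dX|apply derivable_pt_lim_mult, dY; exact dX|
      apply derivable_pt_lim_sqr, dY].
  - intros t ht. destruct (Hbox t ht) as [hx hy]. apply Hg; lra.
  - intros t ht. destruct (Hbox t ht) as [hx hy]. unfold saddle_form.
    assert (0 < e / b) by (apply Rdiv_lt_0_compat; lra). assert (0 <= al / c) by (apply Rdiv_le_0_compat; lra).
    rewrite <- (pow2_abs (X t)), <- (pow2_abs (Y t)).
    pose proof (Rabs_pos (X t)); pose proof (Rabs_pos (Y t)).
    assert (- 2 * X t * Y t <= Rabs (X t) ^ 2 + Rabs (Y t) ^ 2)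
      by (rewrite !pow2_abs; pose proof (pow2_ge_0 (X t + Y t)); nra).
    assert (Rabs (X t) ^ 2 <= rho ^ 2) by nra. assert (Rabs (Y t) ^ 2 <= rho ^ 2) by nra. nra.
Qed.

(** * Existence of solutions by Picard iteration *)

Definition lipschitz (f : R -> R) (K : R) : Prop :=
  forall s t, Rabs (f s - f t) <= K * Rabs (s - t).

Lemma continuous_of_lipschitz (f : R -> R) K : 0 <= K -> lipschitz f K -> forall x, continuous f x.
Proof.
  intros hK H x. apply continuity_pt_filterlim.
  intros eps he. exists (eps / (K + 1)). split; [apply Rdiv_lt_0_compat; lra|].
  intros y [_ hy]. simpl in hy. unfold R_dist in *.
  apply (Rle_lt_trans _ (K * Rabs (y - x))); [apply H|].
  apply (Rle_lt_trans _ ((K + 1) * Rabs (y - x))); [apply Rmult_le_compat_r; [apply Rabs_pos|lra]|].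
  apply (Rmult_lt_reg_l (/ (K + 1))); [apply Rinv_0_lt_compat; lra|].
  rewrite <- Rmult_assoc, Rinv_l by lra. unfold Rdiv in hy. lra.
Qed.

Lemma ex_RInt_of_continuous (f : R -> R) a b : (forall x, continuous f x) -> ex_RInt f a b.
Proof. intros H. apply (@ex_RInt_continuous R_CompleteNormedModule). auto. Qed.

Lemma abs_RInt_le_const_abs (f : R -> R) a b c : (forall x, continuous f x) ->
  (forall x, Rmin a b <= x <= Rmax a b -> Rabs (f x) <= c) -> Rabs (RInt f a b) <= c * Rabs (b - a).
Proof.
  intros Hc Hb. rewrite Rmult_comm.
  apply (norm_RInt_le_const_abs f a b (RInt f a b) c Hb).
  apply (@RInt_correct R_CompleteNormedModule), ex_RInt_of_continuous, Hc.
Qed.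

Lemma RInt_minus_cont (f g : R -> R) a b : (forall x, continuous f x) -> (forall x, continuous g x) ->
  RInt (fun x => f x - g x) a b = RInt f a b - RInt g a b.
Proof. intros; apply (RInt_minus f g); apply ex_RInt_of_continuous; auto. Qed.

Lemma RInt_0_lipschitz (f : R -> R) M : (forall x, continuous f x) -> (forall x, Rabs (f x) <= M) ->
  lipschitz (fun t => RInt f 0 t) M.
Proof.
  intros Hc Hb s t.
  assert (E : RInt f 0 s - RInt f 0 t = RInt f t s).
  { rewrite <- (RInt_Chasles f 0 t s) by (apply ex_RInt_of_continuous; auto).
    change (RInt f 0 t + RInt f t s - RInt f 0 t = RInt f t s). ring. }
  rewrite E. apply abs_RInt_le_const_abs; auto.
Qed.

Lemma RInt_monomial (C : R) (k : nat) t : RInt (fun s => C * s ^ k) 0 t = C * t ^ S k / INR (S k).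
Proof.
  apply is_RInt_unique.
  assert (hn : INR (S k) <> 0) by (rewrite S_INR; pose proof (pos_INR k); lra).
  replace (C * t ^ S k / INR (S k)) with (minus (C * t ^ S k / INR (S k)) (C * 0 ^ S k / INR (S k)))
    by (unfold minus, plus, opp; simpl; field; auto).
  apply (is_RInt_derive (fun s => C * s ^ S k / INR (S k))).
  - intros x _. auto_derive; [exact I|].
    rewrite S_INR in *. simpl pred. destruct k; simpl; field; auto.
  - intros x _. apply (@ex_derive_continuous R_AbsRing R_NormedModule). auto_derive. exact I.
Qed.

Lemma abs_RInt_le_monomial (f : R -> R) C k t : 0 <= t -> (forall x, continuous f x) ->
  (forall s, 0 < s < t -> Rabs (f s) <= C * s ^ k) ->
  Rabs (RInt f 0 t) <= C * t ^ S k / INR (S k).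
Proof.
  intros ht Hc Hb. rewrite <- RInt_monomial.
  assert (Hg : forall x, continuous (fun s => C * s ^ k) x).
  { intros x. apply (@ex_derive_continuous R_AbsRing R_NormedModule). auto_derive. exact I. }
  assert (h1 : RInt f 0 t <= RInt (fun s => C * s ^ k) 0 t).
  { apply RInt_le; auto; try (apply ex_RInt_of_continuous; auto).
    intros s hs. eapply Rle_trans; [apply Rle_abs|]. auto. }
  assert (h2 : RInt (fun s => - (C * s ^ k)) 0 t <= RInt f 0 t).
  { apply RInt_le; auto; try (apply ex_RInt_of_continuous; auto).
    - intros x; apply (continuous_opp (fun s => C * s ^ k)); auto.
    - intros s hs. specialize (Hb s hs).
      assert (- f s <= Rabs (f s)) by (rewrite <- Rabs_Ropp; apply Rle_abs). lra. }
  rewrite (RInt_opp (fun s => C * s ^ k)) in h2 by (apply ex_RInt_of_continuous; auto).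
  change (opp ?x) with (- x) in h2.
  apply Rabs_le. lra.
Qed.

Lemma derivable_pt_lim_RInt_0 (g : R -> R) w0 t : (forall x, continuous g x) ->
  derivable_pt_lim (fun t => w0 + RInt g 0 t) t (g t).
Proof.
  intros Hc. apply (derivable_pt_lim_rw _ _ (0 + g t)); [ring|].
  apply derivable_pt_lim_plus; [apply derivable_pt_lim_const|]. apply is_derive_Reals.
  apply (is_derive_RInt g (fun t => RInt g 0 t) 0 t); auto.
  apply filter_forall. intro b. apply (@RInt_correct R_CompleteNormedModule), ex_RInt_of_continuous, Hc.
Qed.

Lemma Rmax0_lipschitz : lipschitz (Rmax 0) 1.
Proof.
  intros s t. rewrite Rmult_1_l.
  unfold Rmax. destruct (Rle_dec 0 s); destruct (Rle_dec 0 t); unfold Rabs; repeat destruct Rcase_abs; lra.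
Qed.

Definition pair_dist (q q' : (R -> R) * (R -> R)) (t : R) : R :=
  Rabs (fst q t - fst q' t) + Rabs (snd q t - snd q' t).

Section Picard.

Variables (F1 F2 : R -> R -> R) (L M u0 v0 : R).
Hypotheses (hL : 0 < L) (hM : 0 < M).
Hypothesis F1_lip : forall a b a' b', Rabs (F1 a b - F1 a' b') <= L * (Rabs (a - a') + Rabs (b - b')).
Hypothesis F2_lip : forall a b a' b', Rabs (F2 a b - F2 a' b') <= L * (Rabs (a - a') + Rabs (b - b')).
Hypothesis F1_bound : forall a b, Rabs (F1 a b) <= M.
Hypothesis F2_bound : forall a b, Rabs (F2 a b) <= M.

(* Frozen at its value at time [0] for negative times, so that integrands are
   continuous on the whole line. *)
Definition picard_rhs (F : R -> R -> R) (q : (R -> R) * (R -> R)) (s : R) : R :=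
  F (fst q (Rmax 0 s)) (snd q (Rmax 0 s)).

Definition picard_next (q : (R -> R) * (R -> R)) : (R -> R) * (R -> R) :=
  (fun t => u0 + RInt (picard_rhs F1 q) 0 t, fun t => v0 + RInt (picard_rhs F2 q) 0 t).

Fixpoint picard_iter (n : nat) : (R -> R) * (R -> R) :=
  match n with
  | O => (fun _ => u0, fun _ => v0)
  | S n => picard_next (picard_iter n)
  end.

Definition pair_lipschitz (q : (R -> R) * (R -> R)) : Prop :=
  lipschitz (fst q) M /\ lipschitz (snd q) M.

Lemma picard_rhs_continuous F q :
  (forall a b a' b', Rabs (F a b - F a' b') <= L * (Rabs (a - a') + Rabs (b - b'))) ->
  pair_lipschitz q -> forall x, continuous (picard_rhs F q) x.
Proof.
  intros HF [Hu Hv]. apply (continuous_of_lipschitz _ (2 * L * M)); [nra|].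
  intros s t. eapply Rle_trans; [apply HF|].
  pose proof (Rmax0_lipschitz s t). pose proof (Hu (Rmax 0 s) (Rmax 0 t)). pose proof (Hv (Rmax 0 s) (Rmax 0 t)).
  pose proof (Rabs_pos (s - t)).
  assert (M * Rabs (Rmax 0 s - Rmax 0 t) <= M * Rabs (s - t)) by (apply Rmult_le_compat_l; lra).
  nra.
Qed.

Lemma picard_next_lipschitz q : pair_lipschitz q -> pair_lipschitz (picard_next q).
Proof.
  intros Hq. split; intros s t; simpl;
    match goal with |- Rabs (?u + RInt ?g 0 s - (_ + RInt _ 0 t)) <= _ =>
      replace (u + RInt g 0 s - (u + RInt g 0 t)) with (RInt g 0 s - RInt g 0 t) by ring end;
    (apply RInt_0_lipschitz; [apply picard_rhs_continuous; auto|intros x; unfold picard_rhs; auto]).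
Qed.

Lemma picard_iter_lipschitz n : pair_lipschitz (picard_iter n).
Proof.
  induction n as [|n IH]; [|now apply picard_next_lipschitz].
  split; intros s t; simpl; rewrite Rminus_diag, Rabs_R0; pose proof (Rabs_pos (s - t)); nra.
Qed.

Lemma picard_iter_continuous F n :
  (forall a b a' b', Rabs (F a b - F a' b') <= L * (Rabs (a - a') + Rabs (b - b'))) ->
  forall x, continuous (picard_rhs F (picard_iter n)) x.
Proof. intros HF. apply picard_rhs_continuous; auto using picard_iter_lipschitz. Qed.

Lemma picard_iter_at_0 n : fst (picard_iter n) 0 = u0 /\ snd (picard_iter n) 0 = v0.
Proof. destruct n; simpl; [auto|]. rewrite !RInt_point. split; apply Rplus_0_r. Qed.

Lemma picard_iter_neg n t : t <= 0 ->
  fst (picard_iter (S n)) t = u0 + t * F1 u0 v0 /\ snd (picard_iter (S n)) t = v0 + t * F2 u0 v0.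
Proof.
  intros ht. simpl. destruct (picard_iter_at_0 n) as [z1 z2].
  rewrite (RInt_ext _ (fun _ => F1 u0 v0)), (RInt_ext (picard_rhs F2 _) (fun _ => F2 u0 v0)).
  - rewrite !RInt_const. change (scal (t - 0) (F1 u0 v0)) with ((t - 0) * F1 u0 v0).
    change (scal (t - 0) (F2 u0 v0)) with ((t - 0) * F2 u0 v0). split; ring.
  - intros x hx. rewrite Rmin_right, Rmax_left in hx by lra. unfold picard_rhs.
    rewrite Rmax_left by lra. now rewrite z1, z2.
  - intros x hx. rewrite Rmin_right, Rmax_left in hx by lra. unfold picard_rhs.
    rewrite Rmax_left by lra. now rewrite z1, z2.
Qed.

Lemma picard_next_dist q q' C k t : pair_lipschitz q -> pair_lipschitz q' -> 0 <= t ->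
  (forall s, 0 < s < t -> pair_dist q q' s <= C * s ^ k) ->
  pair_dist (picard_next q) (picard_next q') t <= 2 * (L * C * t ^ S k / INR (S k)).
Proof.
  intros Hq Hq' ht Hd. unfold pair_dist, picard_next; cbn [fst snd].
  rewrite !Rminus_plus_l_l, <- !RInt_minus_cont by auto using picard_rhs_continuous.
  assert (Hint : forall F, (forall a b a' b', Rabs (F a b - F a' b') <= L * (Rabs (a - a') + Rabs (b - b'))) ->
    Rabs (RInt (fun s => picard_rhs F q s - picard_rhs F q' s) 0 t) <= L * C * t ^ S k / INR (S k)).
  { intros F HF. apply abs_RInt_le_monomial; auto.
    - intros x. apply (continuous_minus (picard_rhs F q) (picard_rhs F q')); auto using picard_rhs_continuous.
    - intros s hs. unfold picard_rhs. rewrite Rmax_right by lra.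
      eapply Rle_trans; [apply HF|]. rewrite Rmult_assoc. apply Rmult_le_compat_l; [lra|]. now apply Hd. }
  pose proof (Hint F1 F1_lip). pose proof (Hint F2 F2_lip). lra.
Qed.

Lemma picard_step_bound n t : 0 <= t ->
  pair_dist (picard_iter (S n)) (picard_iter n) t
  <= 2 * M * (2 * L) ^ n * t ^ S n / INR (Factorial.fact (S n)).
Proof.
  revert t. induction n as [|n IH]; intros t ht.
  - unfold pair_dist; cbn [picard_iter picard_next fst snd]. rewrite !Rplus_minus_l.
    replace (2 * M * (2 * L) ^ 0 * t ^ 1 / INR (Factorial.fact 1)) with (M * t + M * t) by (simpl; field).
    assert (HB : forall F, (forall a b, Rabs (F a b) <= M) ->
      Rabs (RInt (picard_rhs F (fun _ => u0, fun _ => v0)) 0 t) <= M * t).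
    { intros F HF. eapply Rle_trans.
      - apply abs_RInt_le_const_abs; [intros x; apply continuous_const|intros x _; apply HF].
      - rewrite Rminus_0_r, Rabs_right; lra. }
    pose proof (HB F1 F1_bound). pose proof (HB F2 F2_bound). lra.
  - change (picard_iter (S (S n))) with (picard_next (picard_iter (S n))).
    change (picard_iter (S n)) with (picard_next (picard_iter n)) at 2.
    eapply Rle_trans.
    + apply (picard_next_dist _ _ (2 * M * (2 * L) ^ n / INR (Factorial.fact (S n))) (S n));
        auto using picard_iter_lipschitz.
      intros s hs. eapply Rle_trans; [apply IH; lra|]. right. field. apply INR_fact_neq_0.
    + right. rewrite (fact_simpl (S n)), mult_INR. simpl pow.
      field. split; [apply INR_fact_neq_0|apply not_0_INR; lia].
Qed.

Lemma pair_dist_triangle q1 q2 q3 t : pair_dist q1 q3 t <= pair_dist q1 q2 t + pair_dist q2 q3 t.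
Proof.
  unfold pair_dist.
  pose proof (Rabs_triang (fst q1 t - fst q2 t) (fst q2 t - fst q3 t)).
  pose proof (Rabs_triang (snd q1 t - snd q2 t) (snd q2 t - snd q3 t)).
  replace (fst q1 t - fst q2 t + (fst q2 t - fst q3 t)) with (fst q1 t - fst q3 t) in * by ring.
  replace (snd q1 t - snd q2 t + (snd q2 t - snd q3 t)) with (snd q1 t - snd q3 t) in * by ring.
  lra.
Qed.

(* [E1 x n] is the [n]-th partial sum of the series of [exp x]. *)
Lemma picard_iter_cauchy n m t T : (n <= m)%nat -> 0 <= t <= T ->
  pair_dist (picard_iter m) (picard_iter n) t <= M / L * (E1 (2 * L * T) m - E1 (2 * L * T) n).
Proof.
  intros hnm ht. induction hnm as [|m hnm IH].
  - unfold pair_dist. rewrite !Rminus_diag, Rabs_R0. lra.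
  - eapply Rle_trans; [apply (pair_dist_triangle _ (picard_iter m))|].
    enough (pair_dist (picard_iter (S m)) (picard_iter m) t
            <= M / L * (E1 (2 * L * T) (S m) - E1 (2 * L * T) m)) by lra.
    eapply Rle_trans; [apply picard_step_bound; lra|].
    replace (E1 (2 * L * T) (S m) - E1 (2 * L * T) m) with (/ INR (Factorial.fact (S m)) * (2 * L * T) ^ S m)
      by (unfold E1; rewrite tech5; ring).
    rewrite (Rpow_mult_distr (2 * L) T).
    replace (M / L * (/ INR (Factorial.fact (S m)) * ((2 * L) ^ S m * T ^ S m)))
      with (2 * M * (2 * L) ^ m * T ^ S m / INR (Factorial.fact (S m)))
      by (change ((2 * L) ^ S m) with (2 * L * (2 * L) ^ m); field; split; [apply INR_fact_neq_0|lra]).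
    unfold Rdiv. apply Rmult_le_compat_r; [left; apply Rinv_0_lt_compat, INR_fact_lt_0|].
    apply Rmult_le_compat_l; [apply Rmult_le_pos; [lra|apply pow_le; lra]|]. apply pow_incr; lra.
Qed.

Lemma picard_iter_converges t :
  ex_finite_lim_seq (fun n => fst (picard_iter n) t) /\ ex_finite_lim_seq (fun n => snd (picard_iter n) t).
Proof.
  destruct (Rle_or_lt 0 t) as [ht|ht].
  - assert (C : forall eps : posreal, exists N, forall n m, (N <= n)%nat -> (N <= m)%nat ->
      pair_dist (picard_iter n) (picard_iter m) t < eps).
    { intros eps.
      destruct (CV_Cauchy (E1 (2 * L * t)) (exist _ (exp (2 * L * t)) (E1_cvg (2 * L * t))) (eps * L / M))
        as [N HN]; [apply Rdiv_lt_0_compat; [apply Rmult_lt_0_compat; [apply cond_pos|]|]; auto|].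
      exists N.
      assert (K : forall n m, (N <= n)%nat -> (N <= m)%nat -> (n <= m)%nat ->
        pair_dist (picard_iter m) (picard_iter n) t < eps).
      { intros n m hn hm hnm. eapply Rle_lt_trans; [apply (picard_iter_cauchy n m t t hnm); lra|].
        specialize (HN m n hm hn). unfold R_dist in HN.
        apply (Rmult_lt_reg_l (L / M)); [apply Rdiv_lt_0_compat; auto|].
        replace (L / M * (M / L * (E1 (2 * L * t) m - E1 (2 * L * t) n))) with
          (E1 (2 * L * t) m - E1 (2 * L * t) n) by (field; lra).
        replace (L / M * eps) with (eps * L / M) by (field; lra).
        eapply Rle_lt_trans; [apply Rle_abs|exact HN]. }
      intros n m hn hm. destruct (Nat.le_ge_cases n m) as [h|h]; [|now apply K].
      unfold pair_dist. rewrite (Rabs_minus_sym (fst _ t)), (Rabs_minus_sym (snd _ t)). now apply K. }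
    split; apply ex_lim_seq_cauchy_corr; intros eps; destruct (C eps) as [N HN]; exists N;
      intros n m hn hm; specialize (HN n m hn hm); unfold pair_dist in HN;
      pose proof (Rabs_pos (fst (picard_iter n) t - fst (picard_iter m) t));
      pose proof (Rabs_pos (snd (picard_iter n) t - snd (picard_iter m) t)); lra.
  - split; [exists (u0 + t * F1 u0 v0)|exists (v0 + t * F2 u0 v0)]; apply is_lim_seq_incr_1;
      [apply (is_lim_seq_ext (fun _ => u0 + t * F1 u0 v0))|apply (is_lim_seq_ext (fun _ => v0 + t * F2 u0 v0))];
      try apply is_lim_seq_const; intros n; symmetry; apply picard_iter_neg; lra.
Qed.

Definition picard_limit : (R -> R) * (R -> R) :=
  (fun t => real (Lim_seq (fun n => fst (picard_iter n) t)),
   fun t => real (Lim_seq (fun n => snd (picard_iter n) t))).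

Lemma picard_limit_is_lim t :
  is_lim_seq (fun n => fst (picard_iter n) t) (fst picard_limit t) /\
  is_lim_seq (fun n => snd (picard_iter n) t) (snd picard_limit t).
Proof.
  destruct (picard_iter_converges t) as [[l1 h1] [l2 h2]].
  simpl. rewrite (is_lim_seq_unique _ _ h1), (is_lim_seq_unique _ _ h2). simpl. auto.
Qed.

Lemma pair_dist_is_lim (u : nat -> (R -> R) * (R -> R)) (q q' : (R -> R) * (R -> R)) t :
  is_lim_seq (fun n => fst (u n) t) (fst q t) -> is_lim_seq (fun n => snd (u n) t) (snd q t) ->
  is_lim_seq (fun n => pair_dist (u n) q' t) (pair_dist q q' t).
Proof.
  intros h1 h2. unfold pair_dist.
  apply is_lim_seq_plus'; [apply (is_lim_seq_abs _ (fst q t - fst q' t))|apply (is_lim_seq_abs _ (snd q t - snd q' t))];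
    apply is_lim_seq_minus'; auto; apply is_lim_seq_const.
Qed.

Lemma picard_limit_error n t T : 0 <= t <= T ->
  pair_dist picard_limit (picard_iter n) t <= M / L * (exp (2 * L * T) - E1 (2 * L * T) n).
Proof.
  intros ht. destruct (picard_limit_is_lim t) as [l1 l2].
  refine (is_lim_seq_le_loc (fun m => pair_dist (picard_iter m) (picard_iter n) t)
    (fun m => M / L * (E1 (2 * L * T) m - E1 (2 * L * T) n))
    (pair_dist picard_limit (picard_iter n) t) (M / L * (exp (2 * L * T) - E1 (2 * L * T) n)) _ _ _).
  - exists n. intros m hm. now apply picard_iter_cauchy.
  - now apply pair_dist_is_lim.
  - apply (is_lim_seq_scal_l _ (M / L) (exp (2 * L * T) - E1 (2 * L * T) n)).
    apply is_lim_seq_minus'; [apply is_lim_seq_Reals, E1_cvg|apply is_lim_seq_const].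
Qed.

Lemma picard_limit_lipschitz : pair_lipschitz picard_limit.
Proof.
  split; intros s t; destruct (picard_limit_is_lim s) as [a1 a2]; destruct (picard_limit_is_lim t) as [b1 b2].
  - refine (is_lim_seq_le (fun m => Rabs (fst (picard_iter m) s - fst (picard_iter m) t)) (fun _ => M * Rabs (s - t))
      (Rabs (fst picard_limit s - fst picard_limit t)) (M * Rabs (s - t)) _ _ (is_lim_seq_const _));
      [intros m; apply picard_iter_lipschitz|].
    apply (is_lim_seq_abs _ (fst picard_limit s - fst picard_limit t)). now apply is_lim_seq_minus'.
  - refine (is_lim_seq_le (fun m => Rabs (snd (picard_iter m) s - snd (picard_iter m) t)) (fun _ => M * Rabs (s - t))
      (Rabs (snd picard_limit s - snd picard_limit t)) (M * Rabs (s - t)) _ _ (is_lim_seq_const _));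
      [intros m; apply picard_iter_lipschitz|].
    apply (is_lim_seq_abs _ (snd picard_limit s - snd picard_limit t)). now apply is_lim_seq_minus'.
Qed.

Lemma picard_limit_at_0 : fst picard_limit 0 = u0 /\ snd picard_limit 0 = v0.
Proof.
  destruct (picard_limit_is_lim 0) as [l1 l2].
  assert (h1 : is_lim_seq (fun n => fst (picard_iter n) 0) u0)
    by (apply (is_lim_seq_ext (fun _ => u0)); [intros n; symmetry; apply picard_iter_at_0|apply is_lim_seq_const]).
  assert (h2 : is_lim_seq (fun n => snd (picard_iter n) 0) v0)
    by (apply (is_lim_seq_ext (fun _ => v0)); [intros n; symmetry; apply picard_iter_at_0|apply is_lim_seq_const]).
  apply is_lim_seq_unique in l1, l2, h1, h2. rewrite l1 in h1. rewrite l2 in h2.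
  injection h1; injection h2; auto.
Qed.

Lemma picard_rhs_RInt_lim F t :
  (forall a b a' b', Rabs (F a b - F a' b') <= L * (Rabs (a - a') + Rabs (b - b'))) ->
  is_lim_seq (fun n => RInt (picard_rhs F (picard_iter n)) 0 t) (RInt (picard_rhs F picard_limit) 0 t).
Proof.
  intros HF. set (x := 2 * L * Rabs t). set (I := RInt (picard_rhs F picard_limit) 0 t).
  set (e := fun n => Rabs t * M * (exp x - E1 x n)).
  assert (he : is_lim_seq e 0).
  { assert (H := is_lim_seq_scal_l (fun n => exp x - E1 x n) (Rabs t * M) (exp x - exp x)
      (is_lim_seq_minus' _ _ _ _ (is_lim_seq_const _) (proj2 (is_lim_seq_Reals _ _) (E1_cvg x)))).
    simpl in H. now rewrite Rminus_diag, Rmult_0_r in H. }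
  assert (Hcont := picard_rhs_continuous F picard_limit HF picard_limit_lipschitz).
  apply (is_lim_seq_le_le (fun n => I - e n) _ (fun n => I + e n)).
  - intros n. enough (Rabs (RInt (picard_rhs F (picard_iter n)) 0 t - I) <= e n)
      by (apply Rabs_le_between in H; lra).
    unfold I. rewrite <- RInt_minus_cont by auto using picard_iter_continuous.
    replace (e n) with (L * (M / L * (exp x - E1 x n)) * Rabs (t - 0)) by (unfold e; rewrite Rminus_0_r; field; lra).
    apply abs_RInt_le_const_abs.
    { intros y. apply (continuous_minus (picard_rhs F (picard_iter n)) (picard_rhs F picard_limit));
        auto using picard_iter_continuous. }
    intros s hs. unfold picard_rhs. eapply Rle_trans; [apply HF|]. apply Rmult_le_compat_l; [lra|].
    rewrite (Rabs_minus_sym (fst _ _)), (Rabs_minus_sym (snd _ _)). apply picard_limit_error.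
    unfold Rmax, Rmin, Rabs in *. destruct (Rle_dec 0 s); destruct (Rle_dec 0 t); destruct (Rcase_abs t); lra.
  - assert (H := is_lim_seq_minus' _ _ _ _ (is_lim_seq_const I) he). now rewrite Rminus_0_r in H.
  - assert (H := is_lim_seq_plus' _ _ _ _ (is_lim_seq_const I) he). now rewrite Rplus_0_r in H.
Qed.

Lemma picard_limit_integral t :
  fst picard_limit t = u0 + RInt (picard_rhs F1 picard_limit) 0 t /\
  snd picard_limit t = v0 + RInt (picard_rhs F2 picard_limit) 0 t.
Proof.
  destruct (picard_limit_is_lim t) as [l1 l2].
  apply is_lim_seq_incr_1 in l1, l2. simpl in l1, l2.
  assert (h1 := is_lim_seq_plus' _ _ _ _ (is_lim_seq_const u0) (picard_rhs_RInt_lim F1 t F1_lip)).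
  assert (h2 := is_lim_seq_plus' _ _ _ _ (is_lim_seq_const v0) (picard_rhs_RInt_lim F2 t F2_lip)).
  apply is_lim_seq_unique in l1, l2, h1, h2. rewrite l1 in h1. rewrite l2 in h2.
  split; [injection h1|injection h2]; auto.
Qed.

End Picard.

Theorem picard_existence (F1 F2 : R -> R -> R) L M u0 v0 : 0 < L -> 0 < M ->
  (forall a b a' b', Rabs (F1 a b - F1 a' b') <= L * (Rabs (a - a') + Rabs (b - b'))) ->
  (forall a b a' b', Rabs (F2 a b - F2 a' b') <= L * (Rabs (a - a') + Rabs (b - b'))) ->
  (forall a b, Rabs (F1 a b) <= M) -> (forall a b, Rabs (F2 a b) <= M) ->
  exists U V : R -> R, U 0 = u0 /\ V 0 = v0 /\ forall t, 0 <= t ->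
    derivable_pt_lim U t (F1 (U t) (V t)) /\ derivable_pt_lim V t (F2 (U t) (V t)).
Proof.
  intros hL hM H1 H2 B1 B2.
  set (q := picard_limit F1 F2 u0 v0).
  exists (fst q), (snd q).
  destruct (picard_limit_at_0 F1 F2 L M u0 v0 hL hM H1 H2 B1 B2) as [z1 z2].
  split; [exact z1|]. split; [exact z2|].
  intros t ht.
  assert (Hint := picard_limit_integral F1 F2 L M u0 v0 hL hM H1 H2 B1 B2).
  assert (Hc : forall F, (forall a b a' b', Rabs (F a b - F a' b') <= L * (Rabs (a - a') + Rabs (b - b'))) ->
    forall x, continuous (picard_rhs F q) x)
    by (intros F HF; apply (picard_rhs_continuous L M); auto; apply (picard_limit_lipschitz F1 F2 L M); auto).
  split; [apply (derivable_pt_lim_ext (fun t => u0 + RInt (picard_rhs F1 q) 0 t))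
         |apply (derivable_pt_lim_ext (fun t => v0 + RInt (picard_rhs F2 q) 0 t))];
    try (intro s; symmetry; apply Hint);
    [pose proof (derivable_pt_lim_RInt_0 (picard_rhs F1 q) u0 t (Hc F1 H1)) as H
    |pose proof (derivable_pt_lim_RInt_0 (picard_rhs F2 q) v0 t (Hc F2 H2)) as H];
    unfold picard_rhs in H at 2; rewrite Rmax_right in H by lra; exact H.
Qed.

(** * Solutions of the adoption model *)

Lemma solution_sum_const beta mu p x0 x1 x2 : solution beta mu p x0 x1 x2 ->
  x0 0 + x1 0 + x2 0 = 1 -> forall t, 0 <= t -> x0 t + x1 t + x2 t = 1.
Proof.
  intros Hs H0.
  set (W := fun s => (x0 s + x1 s + x2 s - 1) * exp (mu * s)).
  assert (Hd : forall s, 0 <= s -> derivable_pt_lim W s 0).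
  { intros s hs. destruct (Hs s hs) as [d0 [d1 d2]]. unfold W.
    apply (derivable_pt_lim_rw _ _ ((f0 beta mu p (x0 s) (x1 s) (x2 s) + f1 beta mu p (x0 s) (x1 s) (x2 s)
      + f2 beta mu p (x0 s) (x1 s) (x2 s) - 0 + mu * (x0 s + x1 s + x2 s - 1)) * exp (mu * s)));
      [unfold f0, f1, f2; ring|].
    apply (derivable_pt_lim_mul_exp (fun s => x0 s + x1 s + x2 s - 1)).
    apply derivable_pt_lim_minus; [|apply derivable_pt_lim_const].
    repeat apply derivable_pt_lim_plus; auto. }
  assert (HW : forall t, 0 <= t -> W t = W 0).
  { intros t ht.
    pose proof (nondecreasing_of_derive_nonneg W (fun _ => 0) Hd (fun _ _ => Rle_refl 0) 0 t (Rle_refl 0) ht).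
    pose proof (nondecreasing_of_derive_nonneg (fun s => - W s) (fun _ => 0)
      (fun s hs => derivable_pt_lim_rw _ _ _ _ (Ropp_0) (derivable_pt_lim_opp _ _ _ (Hd s hs)))
      (fun _ _ => Rle_refl 0) 0 t (Rle_refl 0) ht).
    simpl in *. lra. }
  intros t ht. specialize (HW t ht). unfold W in HW. rewrite H0, Rmult_0_r, exp_0 in HW.
  assert (0 < exp (mu * t)) by apply exp_pos. nra.
Qed.

Lemma Rabs_mul_le x y X : Rabs x <= X -> Rabs (x * y) <= X * Rabs y.
Proof. intros. rewrite Rabs_mult. apply Rmult_le_compat_r; auto. apply Rabs_pos. Qed.

Lemma Rabs_triang3 x y z : Rabs (x + y + z) <= Rabs x + Rabs y + Rabs z.
Proof. eapply Rle_trans; [apply Rabs_triang|]. pose proof (Rabs_triang x y). lra. Qed.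

(* Truncating the state variables to [-2, 2] makes the vector field globally Lipschitz
   and bounded without changing it on the simplex. *)
Definition clamp (x : R) : R := Rmax (-2) (Rmin 2 x).

Lemma clamp_lipschitz x y : Rabs (clamp x - clamp y) <= Rabs (x - y).
Proof. unfold clamp, Rmax, Rmin. repeat destruct Rle_dec; unfold Rabs; repeat destruct Rcase_abs; lra. Qed.

Lemma clamp_bound x : -2 <= clamp x <= 2.
Proof. unfold clamp, Rmax, Rmin. repeat destruct Rle_dec; lra. Qed.

Lemma clamp_id x : -2 <= x <= 2 -> clamp x = x.
Proof. intros. unfold clamp, Rmax, Rmin. repeat destruct Rle_dec; lra. Qed.

Lemma clamp_neg x : x < 0 -> x <= clamp x <= 0.
Proof. intros. unfold clamp, Rmax, Rmin. repeat destruct Rle_dec; lra. Qed.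

Section ClampedModel.

Variables beta mu p : R.
Hypotheses (hb : 0 < beta) (hm : 0 < mu) (hp0 : 0 < p) (hp1 : p < 1).

Definition clamped_f0 (u v : R) : R := f0 beta mu p (clamp u) (1 - clamp u - clamp v) (clamp v).
Definition clamped_f2 (u v : R) : R := f2 beta mu p (clamp u) (1 - clamp u - clamp v) (clamp v).

Let K : R := 7 * beta + 2 * mu + 1.

Lemma clamped_f0_lipschitz u v u' v' :
  Rabs (clamped_f0 u v - clamped_f0 u' v') <= K * (Rabs (u - u') + Rabs (v - v')).
Proof.
  unfold clamped_f0, f0, K.
  pose proof (clamp_lipschitz u u'); pose proof (clamp_lipschitz v v').
  assert (ha : Rabs (clamp u) <= 2) by (apply Rabs_le, clamp_bound).
  assert (hb' : Rabs (clamp v') <= 2) by (apply Rabs_le, clamp_bound).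
  set (a := clamp u) in *; set (b := clamp v) in *; set (a' := clamp u') in *; set (b' := clamp v') in *.
  replace (mu - beta * a * b - mu * a - (mu - beta * a' * b' - mu * a'))
    with ((- beta * a) * (b - b') + (- beta * b') * (a - a') + (- mu) * (a - a')) by ring.
  eapply Rle_trans; [apply Rabs_triang3|].
  rewrite !Rabs_mult, !Rabs_Ropp, (Rabs_right beta), (Rabs_right mu) by lra.
  pose proof (Rabs_pos a); pose proof (Rabs_pos b'); pose proof (Rabs_pos (a - a')); pose proof (Rabs_pos (b - b')).
  assert (Rabs a * Rabs (b - b') <= 2 * Rabs (v - v')) by nra.
  assert (Rabs b' * Rabs (a - a') <= 2 * Rabs (u - u')) by nra.
  pose proof (Rabs_pos (u - u')); pose proof (Rabs_pos (v - v')).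
  nra.
Qed.

Lemma clamped_f2_lipschitz u v u' v' :
  Rabs (clamped_f2 u v - clamped_f2 u' v') <= K * (Rabs (u - u') + Rabs (v - v')).
Proof.
  unfold clamped_f2, f2, K.
  pose proof (clamp_lipschitz u u'); pose proof (clamp_lipschitz v v').
  pose proof (clamp_bound u); pose proof (clamp_bound v); pose proof (clamp_bound v').
  set (a := clamp u) in *; set (b := clamp v) in *; set (a' := clamp u') in *; set (b' := clamp v') in *.
  replace (beta * (p * a + (1 - a - b)) * b - mu * b - (beta * (p * a' + (1 - a' - b')) * b' - mu * b'))
    with ((beta * (p - 1) * a) * (b - b') + (beta * (p - 1) * b') * (a - a') +
          (beta - beta * (b + b') - mu) * (b - b')) by ring.
  eapply Rle_trans; [apply Rabs_triang3|].
  assert (-2 <= (p - 1) * a <= 2) by (split; nra).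
  assert (-2 <= (p - 1) * b' <= 2) by (split; nra).
  assert (c1 : Rabs (beta * (p - 1) * a) <= 2 * beta) by (rewrite Rmult_assoc; apply Rabs_le; split; nra).
  assert (c2 : Rabs (beta * (p - 1) * b') <= 2 * beta) by (rewrite Rmult_assoc; apply Rabs_le; split; nra).
  assert (c3 : Rabs (beta - beta * (b + b') - mu) <= 5 * beta + mu) by (apply Rabs_le; split; nra).
  assert (T1 : Rabs (beta * (p - 1) * a * (b - b')) <= 2 * beta * Rabs (v - v'))
    by (eapply Rle_trans; [apply Rabs_mul_le, c1|]; apply Rmult_le_compat_l; lra).
  assert (T2 : Rabs (beta * (p - 1) * b' * (a - a')) <= 2 * beta * Rabs (u - u'))
    by (eapply Rle_trans; [apply Rabs_mul_le, c2|]; apply Rmult_le_compat_l; lra).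
  assert (T3 : Rabs ((beta - beta * (b + b') - mu) * (b - b')) <= (5 * beta + mu) * Rabs (v - v'))
    by (eapply Rle_trans; [apply Rabs_mul_le, c3|]; apply Rmult_le_compat_l; lra).
  pose proof (Rabs_pos (u - u')); pose proof (Rabs_pos (v - v')).
  nra.
Qed.

Let B : R := 14 * beta + 3 * mu + 1.

Lemma clamped_f0_bound u v : Rabs (clamped_f0 u v) <= B.
Proof.
  unfold clamped_f0, f0, B. pose proof (clamp_bound u); pose proof (clamp_bound v).
  assert (-4 <= clamp u * clamp v <= 4) by (split; nra).
  replace (beta * clamp u * clamp v) with (beta * (clamp u * clamp v)) by ring.
  apply Rabs_le; split; nra.
Qed.

Lemma clamped_f2_bound u v : Rabs (clamped_f2 u v) <= B.
Proof.
  unfold clamped_f2, f2, B. pose proof (clamp_bound u); pose proof (clamp_bound v).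
  set (w := p * clamp u + (1 - clamp u - clamp v)).
  assert (-5 <= w <= 7) by (unfold w; split; nra).
  assert (-14 <= w * clamp v <= 14) by (split; nra).
  replace (beta * w * clamp v) with (beta * (w * clamp v)) by ring.
  apply Rabs_le; split; nra.
Qed.

Definition clamped_solution (U V : R -> R) : Prop :=
  forall t, 0 <= t ->
    derivable_pt_lim U t (clamped_f0 (U t) (V t)) /\ derivable_pt_lim V t (clamped_f2 (U t) (V t)).

Lemma clamped_solution_exists u0 v0 :
  exists U V, U 0 = u0 /\ V 0 = v0 /\ clamped_solution U V.
Proof.
  apply (picard_existence clamped_f0 clamped_f2 K B); unfold K, B; try lra.
  - apply clamped_f0_lipschitz.
  - apply clamped_f2_lipschitz.
  - apply clamped_f0_bound.
  - apply clamped_f2_bound.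
Qed.

Lemma clamped_solution_S0_nonneg U V : clamped_solution U V -> 0 <= U 0 ->
  forall t, 0 <= t -> 0 <= U t.
Proof.
  intros HD H0.
  set (eps := Rmin 1 (mu / (4 * beta))).
  assert (e1 : eps <= 1) by apply Rmin_l. assert (e2 : eps <= mu / (4 * beta)) by apply Rmin_r.
  apply (nonneg_barrier U (fun t => clamped_f0 (U t) (V t)) eps); auto.
  - apply Rmin_glb_lt; [lra|apply Rdiv_lt_0_compat; lra].
  - intros t ht; apply HD, ht.
  - intros t ht [h1 h2]. unfold clamped_f0, f0. rewrite (clamp_id (U t)) by lra.
    pose proof (clamp_bound (V t)).
    assert (4 * beta * (- U t) <= mu).
    { apply (Rle_trans _ (4 * beta * (mu / (4 * beta)))); [apply Rmult_le_compat_l; lra|right; field; lra]. }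
    nra.
Qed.

Lemma clamped_solution_A_nonneg U V : clamped_solution U V -> 0 <= V 0 ->
  forall t, 0 <= t -> 0 <= V t.
Proof.
  intros HD H0. set (k := 7 * beta + mu + 1).
  (* [V e^(-k t)] cannot cross zero, because [clamped_f2 <= k * clamp V] when [V < 0] *)
  assert (HW : forall t, 0 <= t -> 0 <= V t * exp (- k * t)).
  { apply (nonneg_barrier _ (fun t => (clamped_f2 (U t) (V t) + - k * V t) * exp (- k * t)) 1); [lra| | |].
    - intros t ht. apply derivable_pt_lim_mul_exp, HD, ht.
    - rewrite Rmult_0_r, exp_0. lra.
    - intros t ht [h1 h2]. assert (he : 0 < exp (- k * t)) by apply exp_pos.
      assert (hV : V t < 0) by (destruct (Rle_or_lt 0 (V t)); auto; nra).
      destruct (clamp_neg _ hV) as [c1 c2]. destruct (clamp_bound (U t)) as [cu1 cu2].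
      destruct (clamp_bound (V t)) as [cv1 cv2].
      set (g := beta * (p * clamp (U t) + (1 - clamp (U t) - clamp (V t))) - mu).
      assert (p * clamp (U t) + (1 - clamp (U t) - clamp (V t)) <= 7) by nra.
      assert (hg : g <= k) by (unfold g, k; nra).
      replace (clamped_f2 (U t) (V t)) with (clamp (V t) * g) by (unfold clamped_f2, f2, g; ring).
      apply Rmult_le_pos; [|lra].
      assert (clamp (V t) * g >= clamp (V t) * k) by nra.
      assert (k * clamp (V t) >= k * V t) by (unfold k; nra).
      lra. }
  intros t ht. specialize (HW t ht). assert (0 < exp (- k * t)) by apply exp_pos. nra.
Qed.

Lemma clamped_solution_S1_nonneg U V : clamped_solution U V -> 0 <= U 0 -> 0 <= V 0 ->
  0 <= 1 - U 0 - V 0 -> forall t, 0 <= t -> 0 <= 1 - U t - V t.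
Proof.
  intros HD HU0 HV0 H0.
  apply (nonneg_barrier (fun t => 1 - U t - V t)
    (fun t => 0 - clamped_f0 (U t) (V t) - clamped_f2 (U t) (V t)) 1); auto; [lra| |].
  - intros t ht. destruct (HD t ht).
    apply derivable_pt_lim_minus; [apply derivable_pt_lim_minus; [apply derivable_pt_lim_const|]|]; auto.
  - intros t ht [h1 h2].
    pose proof (clamped_solution_S0_nonneg U V HD HU0 t ht).
    pose proof (clamped_solution_A_nonneg U V HD HV0 t ht).
    unfold clamped_f0, clamped_f2, f0, f2. rewrite !clamp_id by lra.
    replace (0 - (mu - beta * U t * V t - mu * U t) - (beta * (p * U t + (1 - U t - V t)) * V t - mu * V t))
      with ((1 - p) * beta * (U t * V t) + beta * V t * (- (1 - U t - V t)) + mu * (- (1 - U t - V t))) by ring.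
    assert (0 <= (1 - p) * beta * (U t * V t)) by (apply Rmult_le_pos; apply Rmult_le_pos; lra).
    assert (0 <= beta * V t * (- (1 - U t - V t))) by (apply Rmult_le_pos; [apply Rmult_le_pos|]; lra).
    nra.
Qed.

End ClampedModel.

Lemma simplex_solution_exists beta mu p u0 v0 : 0 < beta -> 0 < mu -> 0 < p < 1 ->
  0 <= u0 -> 0 <= v0 -> u0 + v0 <= 1 ->
  exists x0 x1 x2, solution beta mu p x0 x1 x2 /\ traj x0 x1 x2 0 = (u0, 1 - u0 - v0, v0).
Proof.
  intros hb hm [hp0 hp1] hu hv huv.
  destruct (clamped_solution_exists beta mu p hb hm hp0 hp1 u0 v0) as [U [V [U0 [V0 HD]]]].
  subst u0 v0.
  assert (HU : forall t, 0 <= t -> 0 <= U t) by (apply clamped_solution_S0_nonneg with (beta := beta) (mu := mu) (p := p) (V := V); auto).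
  assert (HV : forall t, 0 <= t -> 0 <= V t) by (apply clamped_solution_A_nonneg with (beta := beta) (mu := mu) (p := p) (U := U); auto).
  assert (HW : forall t, 0 <= t -> 0 <= 1 - U t - V t) by (apply clamped_solution_S1_nonneg with (beta := beta) (mu := mu) (p := p); auto; lra).
  exists U, (fun t => 1 - U t - V t), V. split; [|reflexivity].
  intros t ht. destruct (HD t ht) as [d1 d2].
  specialize (HU t ht). specialize (HV t ht). specialize (HW t ht).
  unfold clamped_f0, clamped_f2 in d1, d2. rewrite !clamp_id in d1, d2 by lra.
  split; [|split]; auto.
  apply (derivable_pt_lim_rw _ _ (0 - f0 beta mu p (U t) (1 - U t - V t) (V t) - f2 beta mu p (U t) (1 - U t - V t) (V t)));
    [unfold f0, f1, f2; ring|].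
  apply derivable_pt_lim_minus; [apply derivable_pt_lim_minus; [apply derivable_pt_lim_const|]|]; auto.
Qed.

(** * Stability of equilibria *)

Lemma dist3_lt_inv (x y : pt) d : dist3 x y < d ->
  Rabs (pS0 x - pS0 y) < d /\ Rabs (pS1 x - pS1 y) < d /\ Rabs (pA x - pA y) < d.
Proof.
  unfold dist3. intros H.
  pose proof (Rmax_l (Rabs (pS0 x - pS0 y)) (Rmax (Rabs (pS1 x - pS1 y)) (Rabs (pA x - pA y)))).
  pose proof (Rmax_r (Rabs (pS0 x - pS0 y)) (Rmax (Rabs (pS1 x - pS1 y)) (Rabs (pA x - pA y)))).
  pose proof (Rmax_l (Rabs (pS1 x - pS1 y)) (Rabs (pA x - pA y))).
  pose proof (Rmax_r (Rabs (pS1 x - pS1 y)) (Rabs (pA x - pA y))). lra.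
Qed.

Lemma dist3_lt_intro (x y : pt) d :
  Rabs (pS0 x - pS0 y) < d -> Rabs (pS1 x - pS1 y) < d -> Rabs (pA x - pA y) < d -> dist3 x y < d.
Proof. intros. unfold dist3. apply Rmax_lub_lt; auto. apply Rmax_lub_lt; auto. Qed.

(* On the plane [S0 + S1 + A = 1] this is a positive definite quadratic form in [x - E]. *)
Definition lyap_weight (aw : R) (E x : pt) : R := aw * (pS0 x - pS0 E) ^ 2 + (pA x - pA E) ^ 2.

Lemma lyap_weight_nonneg aw E x : 0 < aw -> 0 <= lyap_weight aw E x.
Proof. intros. unfold lyap_weight. pose proof (pow2_ge_0 (pS0 x - pS0 E)); pose proof (pow2_ge_0 (pA x - pA E)). nra. Qed.

Lemma lyap_weight_lt_of_dist3 aw E x d : 0 < aw -> 0 < d <= 1 -> dist3 x E < d ->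
  lyap_weight aw E x < (aw + 1) * d.
Proof.
  intros haw hd H. destruct (dist3_lt_inv _ _ _ H) as [h0 [_ h2]]. unfold lyap_weight.
  rewrite <- (pow2_abs (pS0 x - pS0 E)), <- (pow2_abs (pA x - pA E)).
  pose proof (Rabs_pos (pS0 x - pS0 E)); pose proof (Rabs_pos (pA x - pA E)).
  assert (Rabs (pS0 x - pS0 E) ^ 2 < d) by nra. assert (Rabs (pA x - pA E) ^ 2 < d) by nra. nra.
Qed.

Lemma Rabs_lt_of_sqr_lt x e : 0 < e -> x ^ 2 < e ^ 2 -> Rabs x < e.
Proof. intros he h. rewrite <- pow2_abs in h. pose proof (Rabs_pos x). nra. Qed.

Lemma dist3_lt_of_lyap_weight aw E x eps : 0 < aw -> 0 < eps ->
  pS0 x + pS1 x + pA x = pS0 E + pS1 E + pA E ->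
  lyap_weight aw E x < Rmin aw 1 * eps ^ 2 / 4 -> dist3 x E < eps.
Proof.
  intros ha he hsum H. unfold lyap_weight in H.
  assert (m1 : Rmin aw 1 <= aw) by apply Rmin_l. assert (m2 : Rmin aw 1 <= 1) by apply Rmin_r.
  assert (m3 : 0 < Rmin aw 1) by (apply Rmin_glb_lt; lra).
  set (X := pS0 x - pS0 E) in *. set (Y := pA x - pA E) in *.
  pose proof (pow2_ge_0 X); pose proof (pow2_ge_0 Y).
  assert (heps : 0 <= Rmin aw 1 * eps ^ 2) by (apply Rmult_le_pos; [lra|apply pow2_ge_0]).
  assert (hx : Rabs X < eps / 2).
  { apply Rabs_lt_of_sqr_lt; [lra|]. apply (Rmult_lt_reg_l aw); [lra|].
    assert (Rmin aw 1 * eps ^ 2 <= aw * eps ^ 2) by (apply Rmult_le_compat_r; [apply pow2_ge_0|lra]).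
    replace ((eps / 2) ^ 2) with (eps ^ 2 / 4) by field. lra. }
  assert (hy : Rabs Y < eps / 2).
  { apply Rabs_lt_of_sqr_lt; [lra|].
    assert (Rmin aw 1 * eps ^ 2 <= eps ^ 2) by (pose proof (pow2_ge_0 eps); nra).
    replace ((eps / 2) ^ 2) with (eps ^ 2 / 4) by field. nra. }
  apply dist3_lt_intro; [unfold X in hx; lra| |unfold Y in hy; lra].
  replace (pS1 x - pS1 E) with (- (X + Y)) by (unfold X, Y; lra).
  rewrite Rabs_Ropp. eapply Rle_lt_trans; [apply Rabs_triang|lra].
Qed.

Section LyapunovStability.

Variables (beta mu p aw r k : R) (E : pt).
Hypotheses (haw : 0 < aw) (hr : 0 < r) (hk : 0 < k) (hE : pS0 E + pS1 E + pA E = 1).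
Hypothesis decay : forall x0 x1 x2, solution beta mu p x0 x1 x2 -> in_simplex (traj x0 x1 x2 0) ->
  lyap_weight aw E (traj x0 x1 x2 0) < r -> forall t, 0 <= t ->
  lyap_weight aw E (traj x0 x1 x2 t) <= lyap_weight aw E (traj x0 x1 x2 0) /\
  lyap_weight aw E (traj x0 x1 x2 t) * (1 + k * t) <= lyap_weight aw E (traj x0 x1 x2 0).

Let tol (eps : R) : R := Rmin aw 1 * eps ^ 2 / 4.

Lemma tol_pos eps : 0 < eps -> 0 < tol eps.
Proof.
  intros he. unfold tol. apply Rdiv_lt_0_compat; [|lra].
  apply Rmult_lt_0_compat; [apply Rmin_glb_lt; lra|apply pow_lt; lra].
Qed.

Lemma traj_close_of_lyap_weight x0 x1 x2 t eps : solution beta mu p x0 x1 x2 -> in_simplex (traj x0 x1 x2 0) ->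
  0 < eps -> 0 <= t -> lyap_weight aw E (traj x0 x1 x2 t) < tol eps -> dist3 (traj x0 x1 x2 t) E < eps.
Proof.
  intros Hs [_ [_ [_ Hin]]] he ht H. apply dist3_lt_of_lyap_weight with aw; auto.
  rewrite hE. now apply (solution_sum_const beta mu p).
Qed.

Lemma initial_radius_spec c : 0 < c ->
  0 < Rmin 1 (c / (aw + 1)) <= 1 /\ (aw + 1) * Rmin 1 (c / (aw + 1)) <= c.
Proof.
  intros hc. split; [split; [apply Rmin_glb_lt; [lra|apply Rdiv_lt_0_compat; lra]|apply Rmin_l]|].
  assert (Rmin 1 (c / (aw + 1)) <= c / (aw + 1)) by apply Rmin_r.
  apply (Rmult_le_compat_l (aw + 1)) in H; [|lra].
  now replace ((aw + 1) * (c / (aw + 1))) with c in H by (field; lra).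
Qed.

Lemma lyap_stable_of_decay : lyap_stable beta mu p E.
Proof.
  intros eps he. set (c := Rmin r (tol eps)).
  assert (hc : 0 < c) by (apply Rmin_glb_lt; auto using tol_pos).
  destruct (initial_radius_spec c hc) as [hd hd2].
  exists (Rmin 1 (c / (aw + 1))). split; [lra|].
  intros x0 x1 x2 Hs Hin Hd t ht.
  assert (HV0 := lyap_weight_lt_of_dist3 aw E _ _ haw hd Hd).
  assert (c <= r) by apply Rmin_l. assert (c <= tol eps) by apply Rmin_r.
  destruct (decay x0 x1 x2 Hs Hin ltac:(lra) t ht) as [h1 _].
  apply traj_close_of_lyap_weight; auto. lra.
Qed.

Lemma loc_attractive_of_decay : loc_attractive beta mu p E.
Proof.
  destruct (initial_radius_spec r hr) as [hd hd2].
  exists (Rmin 1 (r / (aw + 1))). split; [lra|].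
  intros x0 x1 x2 Hs Hin Hd eps he.
  assert (HV0 := lyap_weight_lt_of_dist3 aw E _ _ haw hd Hd).
  set (W0 := lyap_weight aw E (traj x0 x1 x2 0)) in *.
  assert (hW0 : 0 <= W0) by (apply lyap_weight_nonneg; auto).
  pose proof (tol_pos eps he).
  exists (W0 / (k * tol eps)). intros t ht.
  assert (hkt : 0 < k * tol eps) by (apply Rmult_lt_0_compat; auto).
  assert (ht0 : 0 <= t) by (eapply Rle_trans; [|exact ht]; apply Rdiv_le_0_compat; auto).
  destruct (decay x0 x1 x2 Hs Hin ltac:(unfold W0 in HV0; lra) t ht0) as [_ h2]. fold W0 in h2.
  apply traj_close_of_lyap_weight; auto.
  set (Vt := lyap_weight aw E (traj x0 x1 x2 t)) in *.
  assert (0 <= Vt) by (apply lyap_weight_nonneg; auto).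
  assert (W0 <= k * t * tol eps).
  { apply (Rmult_le_compat_r (k * tol eps)) in ht; [|lra].
    replace (W0 / (k * tol eps) * (k * tol eps)) with W0 in ht by (field; lra). nra. }
  destruct (Rlt_or_le Vt (tol eps)) as [ok|bad]; auto.
  assert (0 <= k * t) by (apply Rmult_le_pos; lra).
  assert (tol eps * (1 + k * t) <= Vt * (1 + k * t)) by (apply Rmult_le_compat_r; lra).
  nra.
Qed.

End LyapunovStability.

(* [(s, 1 - s - a, a)] is an equilibrium; [eta] is the linear decay rate of [A] when
   [a = 0] and vanishes when [a > 0]. *)
Lemma solution_centred beta mu p s a eta x0 x1 x2 : a * eta = 0 ->
  mu - s * (beta * a + mu) = 0 -> beta * (1 - (1 - p) * s - a) - mu = - eta ->
  solution beta mu p x0 x1 x2 -> x0 0 + x1 0 + x2 0 = 1 ->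
  planar_solution (beta * a + mu) (beta * s) beta (a * (beta * (1 - p))) (a * beta + eta) (beta * (1 - p)) beta
    (fun t => x0 t - s) (fun t => x2 t - a).
Proof.
  intros hae R0 R2 Hs H0 t ht.
  assert (hsum := solution_sum_const beta mu p x0 x1 x2 Hs H0 t ht).
  destruct (Hs t ht) as [d0 [_ d2]].
  split; (eapply derivable_pt_lim_rw; [|apply derivable_pt_lim_minus; [eassumption|apply derivable_pt_lim_const]]);
    unfold f0, f2.
  - match goal with |- _ = ?R => transitivity (R + (mu - s * (beta * a + mu))) end; [ring|].
    rewrite R0. ring.
  - replace (x1 t) with (1 - x0 t - x2 t) by lra.
    match goal with |- _ = ?R =>
      transitivity (R + (x2 t * (beta * (1 - (1 - p) * s - a) - mu + eta) - a * eta)) end; [ring|].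
    rewrite R2, hae. ring.
Qed.

Lemma equilibrium_las beta mu p s a eta aw : 0 < beta -> 0 < mu -> 0 <= a -> a * eta = 0 ->
  mu - s * (beta * a + mu) = 0 -> beta * (1 - (1 - p) * s - a) - mu = - eta -> 0 < a * beta + eta ->
  0 < aw -> 0 < 4 * aw * (beta * a + mu) * (a * beta + eta) - (aw * (beta * s) + a * (beta * (1 - p))) ^ 2 ->
  loc_asym_stable beta mu p (s, 1 - s - a, a).
Proof.
  intros hb hm ha hae R0 R2 he haw hD.
  destruct (planar_lyapunov_decay (beta * a + mu) (beta * s) beta (a * (beta * (1 - p))) (a * beta + eta)
    (beta * (1 - p)) beta aw haw ltac:(nra) he hD) as [r [k [hr [hk HS]]]].
  assert (decay : forall x0 x1 x2, solution beta mu p x0 x1 x2 -> in_simplex (traj x0 x1 x2 0) ->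
    lyap_weight aw (s, 1 - s - a, a) (traj x0 x1 x2 0) < r -> forall t, 0 <= t ->
    lyap_weight aw (s, 1 - s - a, a) (traj x0 x1 x2 t) <= lyap_weight aw (s, 1 - s - a, a) (traj x0 x1 x2 0) /\
    lyap_weight aw (s, 1 - s - a, a) (traj x0 x1 x2 t) * (1 + k * t)
      <= lyap_weight aw (s, 1 - s - a, a) (traj x0 x1 x2 0)).
  { intros x0 x1 x2 Hs [_ [_ [_ Hin]]]. unfold lyap_weight, traj, pS0, pA; simpl.
    apply (HS (fun t => x0 t - s) (fun t => x2 t - a)). now apply (solution_centred beta mu p s a eta x0 x1 x2). }
  assert (hE : pS0 (s, 1 - s - a, a) + pS1 (s, 1 - s - a, a) + pA (s, 1 - s - a, a) = 1)
    by (unfold pS0, pS1, pA; simpl; ring).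
  split; [apply lyap_stable_of_decay with (aw := aw) (r := r) (k := k)
         |apply loc_attractive_of_decay with (aw := aw) (r := r) (k := k)]; auto.
Qed.

Lemma lyap_stable_solutions_stay_near beta mu p E rho : 0 < beta -> 0 < mu -> 0 < p < 1 ->
  lyap_stable beta mu p E -> 0 < rho ->
  exists d, 0 < d /\ forall u v, 0 <= u -> 0 <= v -> u + v <= 1 -> dist3 (u, 1 - u - v, v) E < d ->
    exists x0 x1 x2, solution beta mu p x0 x1 x2 /\ x0 0 = u /\ x2 0 = v /\ x0 0 + x1 0 + x2 0 = 1 /\
      forall t, 0 <= t -> Rabs (x0 t - pS0 E) < rho /\ Rabs (x2 t - pA E) < rho.
Proof.
  intros hb hm hp Hst hrho. destruct (Hst rho hrho) as [d [hd Hd]].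
  exists d. split; auto. intros u v hu hv huv Hdist.
  destruct (simplex_solution_exists beta mu p u v hb hm hp hu hv huv) as [x0 [x1 [x2 [Hs H0]]]].
  exists x0, x1, x2. unfold traj in H0. injection H0 as e0 e1 e2.
  split; [exact Hs|]. split; [exact e0|]. split; [exact e2|]. split; [lra|].
  intros t ht. assert (Hin : in_simplex (traj x0 x1 x2 0))
    by (unfold in_simplex, traj, pS0, pS1, pA; simpl; rewrite e0, e1, e2; repeat split; lra).
  assert (H := Hd x0 x1 x2 Hs Hin ltac:(unfold traj; rewrite e0, e1, e2; exact Hdist) t ht).
  destruct (dist3_lt_inv _ _ _ H) as [h0 [_ h2]]. auto.
Qed.

Lemma saddle_equilibrium_unstable beta mu p s a : 0 < beta -> 0 < mu -> 0 < p < 1 -> 0 < s -> 0 < a ->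
  0 <= 1 - s - a -> mu - s * (beta * a + mu) = 0 -> beta * (1 - (1 - p) * s - a) - mu = 0 ->
  beta * a + mu < beta * (1 - p) * s -> unstable beta mu p (s, 1 - s - a, a).
Proof.
  intros hb hm hp hs ha h1 R0 R2 hc Hst.
  assert (hc' : 0 < a * (beta * (1 - p))) by (apply Rmult_lt_0_compat; [lra|apply Rmult_lt_0_compat; lra]).
  assert (hD : 0 < beta * s * (a * (beta * (1 - p))) - (beta * a + mu) * (a * beta + 0))
    by (replace (beta * s * (a * (beta * (1 - p))) - (beta * a + mu) * (a * beta + 0))
          with (a * beta * (beta * (1 - p) * s - (beta * a + mu))) by ring;
        apply Rmult_lt_0_compat; [apply Rmult_lt_0_compat|]; lra).
  destruct (planar_saddle_trapped (beta * a + mu) (beta * s) beta (a * (beta * (1 - p))) (a * beta + 0)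
    (beta * (1 - p)) beta ltac:(nra) hc' ltac:(nra) ltac:(nra) hD) as [rho [hrho Htrap]].
  destruct (lyap_stable_solutions_stay_near beta mu p _ rho hb hm hp Hst hrho) as [d [hd Hnear]].
  (* moving from the saddle along the [S0]-[S1] direction makes [saddle_form] positive *)
  set (h := Rmin (d / 2) (s / 2)).
  assert (hh : 0 < h) by (apply Rmin_glb_lt; lra).
  assert (h <= d / 2) by apply Rmin_l. assert (h <= s / 2) by apply Rmin_r.
  destruct (Hnear (s - h) a ltac:(lra) ltac:(lra) ltac:(lra)) as [x0 [x1 [x2 [Hs [e0 [e2 [Hsum Hbox]]]]]]].
  { apply dist3_lt_intro; unfold pS0, pS1, pA; simpl.
    - replace (s - h - s) with (- h) by ring. rewrite Rabs_Ropp, Rabs_right; lra.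
    - replace (1 - (s - h) - a - (1 - s - a)) with h by ring. rewrite Rabs_right; lra.
    - rewrite Rminus_diag, Rabs_R0; lra. }
  assert (Q := Htrap _ _ (solution_centred beta mu p s a 0 x0 x1 x2 ltac:(ring) R0 ltac:(lra) Hs Hsum) Hbox).
  unfold saddle_form in Q. simpl in Q. rewrite e0, e2 in Q.
  assert (0 < (a * beta + 0) / (beta * s) * h ^ 2)
    by (apply Rmult_lt_0_compat; [apply Rdiv_lt_0_compat; nra|apply pow_lt; lra]).
  match type of Q with ?L <= 0 => replace L with ((a * beta + 0) / (beta * s) * h ^ 2) in Q by ring end.
  lra.
Qed.

Lemma E0_unstable beta mu p : 0 < beta -> 0 < mu -> 0 < p < 1 -> mu < beta * p -> unstable beta mu p E0.
Proof.
  intros hb hm hp hc Hst.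
  destruct (planar_repelling_trapped (beta * 0 + mu) (beta * 1) beta (0 * beta + (mu - beta * p)) (beta * (1 - p)) beta
    ltac:(lra)) as [rho [hrho Htrap]].
  destruct (lyap_stable_solutions_stay_near beta mu p _ rho hb hm hp Hst hrho) as [d [hd Hnear]].
  set (h := Rmin (d / 2) (1 / 2)).
  assert (hh : 0 < h) by (apply Rmin_glb_lt; lra).
  assert (h <= d / 2) by apply Rmin_l. assert (h <= 1 / 2) by apply Rmin_r.
  destruct (Hnear (1 - h) h ltac:(lra) ltac:(lra) ltac:(lra)) as [x0 [x1 [x2 [Hs [e0 [e2 [Hsum Hbox]]]]]]].
  { apply dist3_lt_intro; unfold E0, pS0, pS1, pA; simpl.
    - replace (1 - h - 1) with (- h) by ring. rewrite Rabs_Ropp, Rabs_right; lra.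
    - replace (1 - (1 - h) - h - 0) with 0 by ring. rewrite Rabs_R0; lra.
    - rewrite Rminus_0_r, Rabs_right; lra. }
  assert (Hp := solution_centred beta mu p 1 0 (mu - beta * p) x0 x1 x2 ltac:(ring) ltac:(ring) ltac:(ring) Hs Hsum).
  replace (0 * (beta * (1 - p))) with 0 in Hp by ring.
  assert (Y0 := Htrap _ _ Hp Hbox). simpl in Y0. lra.
Qed.

Lemma E0_las beta mu p : 0 < beta -> 0 < mu -> beta * p < mu -> loc_asym_stable beta mu p E0.
Proof.
  intros hb hm hc. set (eta := mu - beta * p).
  replace E0 with (1, 1 - 1 - 0, 0) by (unfold E0; f_equal; f_equal; ring).
  apply (equilibrium_las beta mu p 1 0 eta (2 * mu * eta / beta ^ 2)); unfold eta; try lra; try ring.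
  - apply Rdiv_lt_0_compat; [|apply pow_lt]; nra.
  - replace (4 * (2 * mu * (mu - beta * p) / beta ^ 2) * (beta * 0 + mu) * (0 * beta + (mu - beta * p))
      - (2 * mu * (mu - beta * p) / beta ^ 2 * (beta * 1) + 0 * (beta * (1 - p))) ^ 2)
      with (4 * (mu * (mu - beta * p)) ^ 2 / beta ^ 2) by (field; lra).
    apply Rdiv_lt_0_compat; [|apply pow_lt; lra]. assert (0 < mu * (mu - beta * p)) by nra. nra.
Qed.

(** * Endemic equilibria *)

(* At an endemic equilibrium, [u = delta * A + 1] is a root of this quadratic; its
   discriminant is [delta^2 * (1 - 4 (1 - p) / delta)]. *)
Definition adoption_quadratic (delta p u : R) : R := u ^ 2 - delta * u + delta * (1 - p).

Section Equilibria.

Variables beta mu p delta : R.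
Hypotheses (hm : 0 < mu) (hp0 : 0 < p) (hp1 : p < 1) (hd : 0 < delta) (hbd : beta = delta * mu).

Lemma Epoint_equations a : 0 < delta * a + 1 -> adoption_quadratic delta p (delta * a + 1) = 0 ->
  mu - 1 / (delta * a + 1) * (beta * a + mu) = 0 /\
  beta * (1 - (1 - p) * (1 / (delta * a + 1)) - a) - mu = 0.
Proof.
  intros hu hq. rewrite hbd. unfold adoption_quadratic in hq.
  set (u := delta * a + 1) in *. replace a with ((u - 1) / delta) by (unfold u; field; lra).
  split.
  - field. split; lra.
  - transitivity (- mu / u * (u ^ 2 - delta * u + delta * (1 - p))); [field; split; lra|].
    rewrite hq. field. lra.
Qed.

Lemma Epoint_S1 a : 0 < delta * a + 1 -> adoption_quadratic delta p (delta * a + 1) = 0 ->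
  1 - 1 / (delta * a + 1) - a = (delta * a + 1 - p * delta) / (delta * (delta * a + 1)).
Proof.
  intros hu hq. unfold adoption_quadratic in hq.
  set (u := delta * a + 1) in *. replace a with ((u - 1) / delta) by (unfold u; field; lra).
  apply (Rmult_eq_reg_r (delta * u)); [|nra].
  transitivity (delta * u - (u - 1) * u - delta); [field; split; lra|].
  transitivity (u - p * delta); [nra|]. field. split; lra.
Qed.

Lemma Epoint_endemic a : 0 < a -> adoption_quadratic delta p (delta * a + 1) = 0 ->
  p * delta <= delta * a + 1 -> endemic beta mu p (Epoint delta a).
Proof.
  intros ha hq hS1.
  assert (hu : 0 < delta * a + 1) by nra.
  destruct (Epoint_equations a hu hq) as [R0 R2].
  assert (S1 := Epoint_S1 a hu hq).
  unfold endemic, Epoint, in_simplex, is_equilibrium, pS0, pS1, pA. simpl.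
  set (s := 1 / (delta * a + 1)) in *.
  assert (hs : 0 < s) by (apply Rdiv_lt_0_compat; lra).
  assert (0 <= 1 - s - a) by (rewrite S1; apply Rdiv_le_0_compat; nra).
  assert (F0 : f0 beta mu p s (1 - s - a) a = 0) by (unfold f0; rewrite <- R0; ring).
  assert (F2 : f2 beta mu p s (1 - s - a) a = 0)
    by (unfold f2; transitivity (a * (beta * (1 - (1 - p) * s - a) - mu)); [ring|rewrite R2; ring]).
  assert (F1 : f1 beta mu p s (1 - s - a) a = 0).
  { transitivity (- (f0 beta mu p s (1 - s - a) a + f2 beta mu p s (1 - s - a) a)); [unfold f0, f1, f2; ring|].
    rewrite F0, F2. ring. }
  repeat split; lra.
Qed.

Lemma endemic_Epoint x : endemic beta mu p x ->
  0 < pA x /\ adoption_quadratic delta p (delta * pA x + 1) = 0 /\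
  p * delta <= delta * pA x + 1 /\ x = Epoint delta (pA x).
Proof.
  destruct x as [[S0 S1] A]. unfold endemic, in_simplex, is_equilibrium, pS0, pS1, pA, Epoint; simpl.
  intros [[h0 [h1 [h2 hs]]] [hA [F0 [_ F2]]]]. unfold f0, f2 in F0, F2.
  assert (hu : 0 < delta * A + 1) by nra.
  assert (e0 : S0 = 1 / (delta * A + 1)).
  { apply (Rmult_eq_reg_r (mu * (delta * A + 1))); [|nra].
    transitivity (mu - (mu - beta * S0 * A - mu * S0)); [rewrite hbd; ring|]. rewrite F0. field. lra. }
  assert (e2 : delta * (p * S0 + S1) = 1).
  { apply (Rmult_eq_reg_l (mu * A)); [|nra].
    transitivity (beta * (p * S0 + S1) * A - mu * A + mu * A); [rewrite hbd; ring|]. rewrite F2. ring. }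
  assert (hq : adoption_quadratic delta p (delta * A + 1) = 0).
  { unfold adoption_quadratic. replace S1 with (1 - S0 - A) in e2 by lra. rewrite e0 in e2.
    transitivity (- (delta * A + 1) *
      (delta * (p * (1 / (delta * A + 1)) + (1 - 1 / (delta * A + 1) - A)) - 1)); [field; lra|].
    rewrite e2. ring. }
  assert (S1eq := Epoint_S1 A hu hq). rewrite <- e0 in S1eq.
  repeat split; auto.
  - assert (hS1 : 0 <= (delta * A + 1 - p * delta) / (delta * (delta * A + 1))) by (rewrite <- S1eq; lra).
    assert (0 < delta * (delta * A + 1)) by nra.
    replace (delta * A + 1 - p * delta)
      with ((delta * A + 1 - p * delta) / (delta * (delta * A + 1)) * (delta * (delta * A + 1))) in hS1
      by (field; lra).
    enough (0 <= delta * A + 1 - p * delta) by lra.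
    replace (delta * A + 1 - p * delta)
      with ((delta * A + 1 - p * delta) / (delta * (delta * A + 1)) * (delta * (delta * A + 1))) by (field; lra).
    apply Rmult_le_pos; lra.
  - rewrite <- e0. f_equal. f_equal. lra.
Qed.

Lemma Epoint_rate_gap a : 0 < delta * a + 1 ->
  beta * a + mu - beta * (1 - p) * (1 / (delta * a + 1))
  = mu / (delta * a + 1) * ((delta * a + 1) ^ 2 - delta * (1 - p)).
Proof. intros hu. rewrite hbd. field. lra. Qed.

Lemma Epoint_las a : 0 < a -> adoption_quadratic delta p (delta * a + 1) = 0 ->
  delta * (1 - p) < (delta * a + 1) ^ 2 -> loc_asym_stable beta mu p (Epoint delta a).
Proof.
  intros ha hq hc. assert (hb : 0 < beta) by nra.
  assert (hu : 0 < delta * a + 1) by nra.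
  destruct (Epoint_equations a hu hq) as [R0 R2].
  assert (hgap := Epoint_rate_gap a hu).
  assert (0 < mu / (delta * a + 1)) by (apply Rdiv_lt_0_compat; lra).
  assert (hc' : beta * (1 - p) * (1 / (delta * a + 1)) < beta * a + mu) by nra.
  unfold Epoint. set (s := 1 / (delta * a + 1)) in *.
  assert (hs : 0 < s) by (apply Rdiv_lt_0_compat; lra).
  apply (equilibrium_las beta mu p s a 0 (a * (1 - p) / s)); try lra; try nra.
  - apply Rdiv_lt_0_compat; nra.
  - replace (4 * (a * (1 - p) / s) * (beta * a + mu) * (a * beta + 0) - (a * (1 - p) / s * (beta * s) + a * (beta * (1 - p))) ^ 2)
      with (4 * (a * a * beta * (1 - p) / s) * (beta * a + mu - beta * (1 - p) * s)) by (field; lra).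
    apply Rmult_lt_0_compat; [|lra]. apply Rmult_lt_0_compat; [lra|].
    apply Rdiv_lt_0_compat; [|lra]. repeat apply Rmult_lt_0_compat; lra.
Qed.

Lemma Epoint_unstable a : 0 < a -> adoption_quadratic delta p (delta * a + 1) = 0 ->
  p * delta <= delta * a + 1 -> (delta * a + 1) ^ 2 < delta * (1 - p) -> unstable beta mu p (Epoint delta a).
Proof.
  intros ha hq hS1 hc. assert (hb : 0 < beta) by nra.
  assert (hu : 0 < delta * a + 1) by nra.
  destruct (Epoint_equations a hu hq) as [R0 R2].
  destruct (Epoint_endemic a ha hq hS1) as [[_ [hS1' _]] _].
  assert (hgap := Epoint_rate_gap a hu).
  assert (0 < mu / (delta * a + 1)) by (apply Rdiv_lt_0_compat; lra).
  assert (beta * a + mu < beta * (1 - p) * (1 / (delta * a + 1))) by nra.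
  unfold Epoint in *. unfold pS1 in hS1'; simpl in hS1'.
  apply saddle_equilibrium_unstable; auto. apply Rdiv_lt_0_compat; lra.
Qed.

End Equilibria.

Lemma adoption_quadratic_vertex delta p u : 0 < delta ->
  adoption_quadratic delta p u = (u - delta / 2) ^ 2 - delta ^ 2 / 4 * (1 - 4 * (1 - p) / delta).
Proof. intros hd. unfold adoption_quadratic. field. lra. Qed.

Lemma A_plus_minus_vieta delta p : 0 < delta -> 0 <= 1 - 4 * (1 - p) / delta ->
  (delta * A_plus delta p + 1) + (delta * A_minus delta p + 1) = delta /\
  (delta * A_plus delta p + 1) * (delta * A_minus delta p + 1) = delta * (1 - p) /\
  (delta * A_plus delta p + 1) - (delta * A_minus delta p + 1) = delta * sqrt (1 - 4 * (1 - p) / delta).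
Proof.
  intros hd hD. unfold A_plus, A_minus. set (D := 1 - 4 * (1 - p) / delta) in *.
  assert (hq : sqrt D * sqrt D = D) by (apply sqrt_sqrt; lra).
  repeat split; [field; lra| |field; lra].
  transitivity (delta ^ 2 / 4 * (1 - sqrt D * sqrt D)); [field; lra|]. rewrite hq. unfold D. field. lra.
Qed.

Lemma root_is_A_plus_or_minus delta p a : 0 < delta -> adoption_quadratic delta p (delta * a + 1) = 0 ->
  a = A_plus delta p \/ a = A_minus delta p.
Proof.
  intros hd hq.
  assert (hD : 0 <= 1 - 4 * (1 - p) / delta).
  { rewrite adoption_quadratic_vertex in hq by lra. pose proof (pow2_ge_0 (delta * a + 1 - delta / 2)).
    apply (Rmult_le_reg_l (delta ^ 2 / 4)); [apply Rdiv_lt_0_compat; [apply pow_lt|]; lra|]. lra. }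
  destruct (A_plus_minus_vieta delta p hd hD) as [hs [hp _]].
  set (P := delta * A_plus delta p + 1) in *. set (Q := delta * A_minus delta p + 1) in *.
  assert (hfac : (delta * a + 1 - P) * (delta * a + 1 - Q) = 0).
  { transitivity ((delta * a + 1) ^ 2 - (P + Q) * (delta * a + 1) + P * Q); [ring|].
    rewrite hs, hp. exact hq. }
  apply Rmult_integral in hfac. destruct hfac as [h|h]; [left|right]; apply (Rmult_eq_reg_l delta); unfold P, Q in h; lra.
Qed.

Section EndemicEquilibria.

Variables beta mu p delta : R.
Hypotheses (hm : 0 < mu) (hp0 : 0 < p) (hp1 : p < 1) (hd : 0 < delta) (hbd : beta = delta * mu).

Local Notation P := (delta * A_plus delta p + 1).
Local Notation Q := (delta * A_minus delta p + 1).

Lemma A_plus_minus_simple_roots : 4 * (1 - p) < delta ->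
  P + Q = delta /\ P * Q = delta * (1 - p) /\ Q < P /\
  adoption_quadratic delta p P = 0 /\ adoption_quadratic delta p Q = 0.
Proof.
  intros hD.
  assert (hD' : 0 < 1 - 4 * (1 - p) / delta)
    by (apply (Rmult_lt_reg_r delta); [lra|]; replace ((1 - 4 * (1 - p) / delta) * delta) with (delta - 4 * (1 - p)) by (field; lra); lra).
  destruct (A_plus_minus_vieta delta p hd ltac:(lra)) as [hs [hp hdiff]].
  assert (0 < delta * sqrt (1 - 4 * (1 - p) / delta)) by (apply Rmult_lt_0_compat; [lra|apply sqrt_lt_R0; lra]).
  unfold adoption_quadratic. repeat split; [exact hs|exact hp|lra| |].
  - transitivity (P ^ 2 - (P + Q) * P + P * Q); [rewrite hs, hp; reflexivity|ring].
  - transitivity (Q ^ 2 - (P + Q) * Q + P * Q); [rewrite hs, hp; reflexivity|ring].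
Qed.

Lemma no_endemic_of_neg_discriminant : delta < 4 * (1 - p) -> forall x, ~ endemic beta mu p x.
Proof.
  intros hD x Hx. destruct (endemic_Epoint beta mu p delta hm hp0 hp1 hd hbd x Hx) as [_ [hq _]].
  rewrite adoption_quadratic_vertex in hq by lra.
  assert (delta ^ 2 / 4 * (1 - 4 * (1 - p) / delta) = (delta - 4 * (1 - p)) * (delta / 4)) by (field; lra).
  pose proof (pow2_ge_0 (delta * pA x + 1 - delta / 2)). nra.
Qed.

(* Both roots of the quadratic are then at most [1], i.e. correspond to [A <= 0]. *)
Lemma no_endemic_of_high_adoption : 1 / 2 <= p -> p * delta <= 1 -> forall x, ~ endemic beta mu p x.
Proof.
  intros hp hpd x Hx. destruct (endemic_Epoint beta mu p delta hm hp0 hp1 hd hbd x Hx) as [hA [hq _]].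
  unfold adoption_quadratic in hq. set (u := delta * pA x + 1) in *.
  assert (hu : 1 < u) by (unfold u; nra).
  assert ((1 - u) * (1 - (delta - u)) = 1 - p * delta) by nra.
  assert (delta <= 2) by nra.
  assert (1 - (delta - u) <= 0) by nra.
  lra.
Qed.

Lemma endemic_iff_root x : endemic beta mu p x <->
  exists a, 0 < a /\ adoption_quadratic delta p (delta * a + 1) = 0 /\ p * delta <= delta * a + 1 /\
    x = Epoint delta a.
Proof.
  split.
  - intros Hx. destruct (endemic_Epoint beta mu p delta hm hp0 hp1 hd hbd x Hx) as [hA [hq [hS1 ->]]].
    exists (pA x). auto.
  - intros [a [ha [hq [hS1 ->]]]]. now apply Epoint_endemic.
Qed.

Lemma A_pos_of_shift_gt_1 a : 1 < delta * a + 1 -> 0 < a.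
Proof. intros h. destruct (Rlt_or_le 0 a); auto. nra. Qed.

Lemma two_endemic_equilibria : p < 1 / 2 -> 4 * (1 - p) < delta -> p * delta < 1 ->
  (forall x, endemic beta mu p x <-> x = Epoint delta (A_plus delta p) \/ x = Epoint delta (A_minus delta p)) /\
  Epoint delta (A_plus delta p) <> Epoint delta (A_minus delta p) /\
  loc_asym_stable beta mu p (Epoint delta (A_plus delta p)) /\
  unstable beta mu p (Epoint delta (A_minus delta p)).
Proof.
  intros hp hD hpd. destruct (A_plus_minus_simple_roots hD) as [hs [hprod [hlt [hqP hqQ]]]].
  assert (hQ1 : 1 < Q) by nra.
  assert (hAp := A_pos_of_shift_gt_1 (A_plus delta p) ltac:(lra)).
  assert (hAm := A_pos_of_shift_gt_1 (A_minus delta p) hQ1).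
  split; [|split; [|split]].
  - intros x. rewrite endemic_iff_root. split.
    + intros [a [ha [hq [_ ->]]]]. destruct (root_is_A_plus_or_minus delta p a hd hq) as [->| ->]; auto.
    + intros [-> | ->]; eexists; repeat split; eauto; lra.
  - intros He. assert (A_plus delta p = A_minus delta p) by (apply (f_equal pA) in He; exact He). nra.
  - apply Epoint_las; auto; nra.
  - apply Epoint_unstable; auto; nra.
Qed.

Lemma unique_endemic_equilibrium : 1 <= p * delta -> 1 < p * delta \/ 2 < delta ->
  (forall x, endemic beta mu p x <-> x = Epoint delta (A_plus delta p)) /\
  loc_asym_stable beta mu p (Epoint delta (A_plus delta p)).
Proof.
  intros hpd hcase.
  assert (hD : 4 * (1 - p) < delta).
  { assert (E : p * (delta - 4 * (1 - p)) = (p * delta - 1) + (1 - 2 * p) ^ 2) by ring.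
    enough (0 < p * (delta - 4 * (1 - p))) by nra.
    destruct (Req_dec p (1 / 2)) as [->|hp2]; [destruct hcase; lra|].
    assert (0 < (1 - 2 * p) ^ 2) by (apply pow2_gt_0; lra). lra. }
  destruct (A_plus_minus_simple_roots hD) as [hs [hprod [hlt [hqP hqQ]]]].
  assert (hP1 : 1 < P) by (destruct hcase; nra).
  assert (hQ1 : Q <= 1) by nra.
  assert (hAp := A_pos_of_shift_gt_1 (A_plus delta p) hP1).
  split.
  - intros x. rewrite endemic_iff_root. split.
    + intros [a [ha [hq [_ ->]]]]. destruct (root_is_A_plus_or_minus delta p a hd hq) as [->| ->]; auto.
      exfalso. nra.
    + intros ->. eexists; repeat split; eauto.
      (* [p * delta] lies between the roots, as the quadratic is nonpositive there *)
      assert (hval : (p * delta - P) * (p * delta - Q) = delta * (1 - p) * (1 - p * delta)).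
      { transitivity ((p * delta) ^ 2 - (P + Q) * (p * delta) + P * Q); [ring|]. rewrite hs, hprod. ring. }
      assert (0 < delta * (1 - p)) by nra.
      assert (delta * (1 - p) * (1 - p * delta) <= 0) by nra.
      destruct (Rle_or_lt (p * delta) P); auto. nra.
  - apply Epoint_las; auto; nra.
Qed.

End EndemicEquilibria.

Lemma div_bound_iff p r : 0 < p ->
  (r < 1 / p <-> p * r < 1) /\ (r <= 1 / p <-> p * r <= 1) /\
  (1 / p < r <-> 1 < p * r) /\ (1 / p <= r <-> 1 <= p * r).
Proof.
  intros hp. assert (E : p * (1 / p) = 1) by (field; lra).
  repeat split; intros h.
  all: try (rewrite <- E; first [apply Rmult_lt_compat_l | apply Rmult_le_compat_l]; lra).
  all: first [apply (Rmult_lt_reg_l p) | apply (Rmult_le_reg_l p)]; lra.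
Qed.

Theorem mainTheorem2 (beta mu p : R)
  (hbeta : 0 < beta) (hmu : 0 < mu) (hp0 : 0 < p) (hp1 : p < 1) :
  let delta : R := (beta / mu)%R in
  let E1 : pt := Epoint delta (A_plus delta p) in
  let E2 : pt := Epoint delta (A_minus delta p) in
  ((p < 1 / 2)%R ->
     (delta < 4 * (1 - p) ->
        (forall x, ~ endemic beta mu p x) /\ loc_asym_stable beta mu p E0) /\
     (4 * (1 - p) < delta < 1 / p ->
        (forall x, endemic beta mu p x <-> x = E1 \/ x = E2) /\ E1 <> E2 /\
        loc_asym_stable beta mu p E1 /\ unstable beta mu p E2 /\
        loc_asym_stable beta mu p E0) /\
     (1 / p <= delta ->
        (forall x, endemic beta mu p x <-> x = E1) /\
        loc_asym_stable beta mu p E1 /\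
        (1 / p < delta -> unstable beta mu p E0))) /\
  (1 / 2 <= p ->
     (delta <= 1 / p -> forall x, ~ endemic beta mu p x) /\
     (delta < 1 / p -> loc_asym_stable beta mu p E0) /\
     (1 / p < delta ->
        (forall x, endemic beta mu p x <-> x = E1) /\
        loc_asym_stable beta mu p E1 /\ unstable beta mu p E0)).
Proof.
  intros delta E1 E2.
  assert (hd : 0 < delta) by (apply Rdiv_lt_0_compat; auto).
  assert (hbd : beta = delta * mu) by (unfold delta; field; lra).
  destruct (div_bound_iff p delta hp0) as (hlt & hle & hgt & hge).
  assert (hE0s : p * delta < 1 -> loc_asym_stable beta mu p E0) by (intro; apply E0_las; nra).
  assert (hE0u : 1 < p * delta -> unstable beta mu p E0) by (intro; apply E0_unstable; nra).
  split; intros hp2; split; [| split | | split].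
  - intros hD. split; [exact (no_endemic_of_neg_discriminant beta mu p delta hmu hp0 hp1 hd hbd hD)|apply hE0s; nra].
  - intros [hD hpd]. apply hlt in hpd.
    destruct (two_endemic_equilibria beta mu p delta hmu hp0 hp1 hd hbd hp2 hD hpd) as (Hiff & Hne & Hs1 & Hu2).
    repeat (split; [assumption|]). auto.
  - intros hpd. apply hge in hpd.
    destruct (unique_endemic_equilibrium beta mu p delta hmu hp0 hp1 hd hbd hpd ltac:(right; nra)) as [Hiff Hs1].
    split; [exact Hiff|]. split; [exact Hs1|]. intros h. apply hgt in h. auto.
  - intros hpd. apply hle in hpd. exact (no_endemic_of_high_adoption beta mu p delta hmu hp0 hp1 hd hbd hp2 hpd).
  - intros hpd. apply hlt in hpd. auto.
  - intros hpd. apply hgt in hpd.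
    destruct (unique_endemic_equilibrium beta mu p delta hmu hp0 hp1 hd hbd ltac:(lra) (or_introl hpd)) as [Hiff Hs1].
    split; [exact Hiff|]. split; [exact Hs1|]. auto.
Qed.
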